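(* Suppose $h\in C^2(\overline R)$ with finite $C^2$ norm solves the height equation with $\inf_Rh_p>0$, and that $h(q,p)\to H_\pm(p)$ pointwise as $q\to\pm\infty$ for some functions $H_\pm$. If $\mathscr S(H_+)=\mathscr S(H_-)=\mathscr S(H)$ and either $H_+\ge H$ on $[-1,0]$ or $H_+\le H$ on $[-1,0]$, then $H_+\equiv H$. The same holds with $H_+$ replaced by $H_-$.
   Context: Fix $\alpha\in(0,1)$, $\rho\in C^{2+\alpha}([-1,0])$ with $\rho>0$, $\rho_p\le0$, $H\in C^{3+\alpha}([-1,0])$ with $H(-1)=0$, $H(0)=1$, $H_p>0$, and $F>0$. Let $R=\mathbb R\times(-1,0)$ (coordinates $(q,p)$), $T=\mathbb R\times\{0\}$, $B=\mathbb R\times\{-1\}$. The height equation for $h$ is $\big(-\frac{1+h_q^2}{2h_p^2}+\frac1{2H_p^2}\big)_p+\big(\frac{h_q}{h_p}\big)_q-\frac1{F^2}\rho_p(h-H)=0$ in $R$, $\frac{1+h_q^2}{2h_p^2}-\frac1{2H_p^2}+\frac1{F^2}\rho(h-1)=0$ on $T$, $h=0$ on $B$. The flow force of a $q$-independent function $K=K(p)$ with $K_p>0$ is $\mathscr S(K)=\int_{-1}^0\Big[\frac1{2K_p^2}+\frac1{2H_p^2}-\frac1{F^2}\rho(K-H)-\frac1{F^2}\int_0^p\rho H_p\,dp'\Big]K_p\,dp$. *)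

From Stdlib Require Import Reals Lra.
From Coquelicot Require Import Coquelicot.
Open Scope R_scope.

(* The closed interval [-1,0] (the p-range of the closed strip). *)
Definition Icl (x : R) : Prop := -1 <= x <= 0.

Definition is_derive_I (f : R -> R) (x l : R) : Prop :=
  filterlim (fun y => (f y - f x) / (y - x))
    (within (fun y => Icl y /\ y <> x) (locally x)) (locally l).

Definition derive_on_I (f f' : R -> R) : Prop :=
  forall x, Icl x -> is_derive_I f x (f' x).

Definition holder_I (alpha : R) (f : R -> R) : Prop :=
  exists C, forall x y, Icl x -> Icl y ->
    Rabs (f x - f y) <= C * Rpower (Rabs (x - y)) alpha.

Definition C2a_I (alpha : R) (f f1 f2 : R -> R) : Prop :=
  derive_on_I f f1 /\ derive_on_I f1 f2 /\ holder_I alpha f2.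

Definition C3a_I (alpha : R) (f f1 f2 f3 : R -> R) : Prop :=
  derive_on_I f f1 /\ derive_on_I f1 f2 /\ derive_on_I f2 f3 /\ holder_I alpha f3.

Definition cont_strip (g : R -> R -> R) : Prop :=
  forall q p, Icl p ->
    filterlim (fun z : R * R => g (fst z) (snd z))
      (within (fun z : R * R => Icl (snd z)) (locally (q, p))) (locally (g q p)).

Definition bdd_strip (g : R -> R -> R) : Prop :=
  exists M, forall q p, Icl p -> Rabs (g q p) <= M.

Definition C2_bdd_strip (h hq hp hqq hqp hpq hpp : R -> R -> R) : Prop :=
  (forall q p, Icl p ->
     is_derive (fun q' => h q' p) q (hq q p) /\
     is_derive_I (fun p' => h q p') p (hp q p) /\
     is_derive (fun q' => hq q' p) q (hqq q p) /\
     is_derive_I (fun p' => hq q p') p (hqp q p) /\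
     is_derive (fun q' => hp q' p) q (hpq q p) /\
     is_derive_I (fun p' => hp q p') p (hpp q p)) /\
  cont_strip h /\ cont_strip hq /\ cont_strip hp /\ cont_strip hqq /\
  cont_strip hqp /\ cont_strip hpq /\ cont_strip hpp /\
  bdd_strip h /\ bdd_strip hq /\ bdd_strip hp /\ bdd_strip hqq /\
  bdd_strip hqp /\ bdd_strip hpq /\ bdd_strip hpp.

(* The height equation (interior equation, top and bottom boundary conditions);
   H1 = H_p and rho1 = rho_p. *)
Definition height_eq (rho rho1 H H1 : R -> R) (F : R) (h hq hp : R -> R -> R) : Prop :=
  (forall q p, -1 < p < 0 ->
     exists A B,
       is_derive (fun p' => - (1 + (hq q p')^2) / (2 * (hp q p')^2)
                            + / (2 * (H1 p')^2)) p A /\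
       is_derive (fun q' => hq q' p / hp q' p) q B /\
       A + B - / F^2 * rho1 p * (h q p - H p) = 0) /\
  (forall q, (1 + (hq q 0)^2) / (2 * (hp q 0)^2) - / (2 * (H1 0)^2)
             + / F^2 * rho 0 * (h q 0 - 1) = 0) /\
  (forall q, h q (-1) = 0).

(* Flow force of a q-independent K (its derivative K_p taken as Derive K;
   only values on (-1,0) matter for the Riemann integral). *)
Definition flow_force (rho H H1 : R -> R) (F : R) (K : R -> R) : R :=
  RInt (fun p =>
          (/ (2 * (Derive K p)^2) + / (2 * (H1 p)^2)
           - / F^2 * rho p * (K p - H p)
           - / F^2 * RInt (fun t => rho t * H1 t) 0 p) * Derive K p) (-1) 0.

(* As [q -> +oo] the uniform C^2 bounds make [h(q,.)] converge uniformly to its pointwise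
   limit [K], with [h_q -> 0] and [h_p -> K_p >= delta].  Integrating the height equation in
   [p] over [[p0,p1]], the [q]-flux term is the [q]-derivative of a bounded quantity, so along
   suitable [q -> +oo] it disappears; hence [phi = 1/(2 K_p^2) - 1/(2 H_p^2)] satisfies
   [phi' = - rho_p (K - H) / F^2] together with the limiting top condition.  For such [K],
   [S(K) - S(H)] equals the integral of [(K_p - H_p)^3 / (4 K_p^2 H_p^2)] plus an exact
   derivative vanishing at both ends.  If [K >= H] then [rho_p <= 0] gives [phi <= 0], i.e.
   [K_p >= H_p] (symmetrically if [K <= H]), so the cube has a fixed sign; equal flow forces
   then give [K_p = H_p], and [K = H] as both vanish at [p = -1].  The same argument applies
   at [q -> -oo] after reflecting [q]. *)

From Stdlib Require Import Reals Lra Lia ZArith ClassicalEpsilon.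
From Coquelicot Require Import Coquelicot.
Open Scope R_scope.

(** * Calculus on [-1,0] *)

Definition clamp (x : R) : R := Rmax (-1) (Rmin 0 x).

(* Continuity on [-1,0] is continuity of the extension [f \o clamp], which is
   constant outside [-1,0]; the everywhere-continuity lemmas then apply to it. *)
Definition continuous_I (f : R -> R) : Prop :=
  forall x, continuity_pt (fun y => f (clamp y)) x.

Lemma Icl_clamp x : Icl (clamp x).
Proof. unfold clamp, Icl, Rmax, Rmin; repeat destruct Rle_dec; lra. Qed.

Lemma clamp_id x : Icl x -> clamp x = x.
Proof. unfold clamp, Icl, Rmax, Rmin; intros; repeat destruct Rle_dec; lra. Qed.

Lemma clamp_1_lipschitz x y : Rabs (clamp x - clamp y) <= Rabs (x - y).
Proof.
  unfold clamp, Rmax, Rmin; repeat destruct Rle_dec; unfold Rabs; repeat destruct Rcase_abs; lra.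
Qed.

Lemma Icl_between x y z : Icl x -> Icl y -> Rmin x y <= z <= Rmax x y -> Icl z.
Proof. unfold Icl, Rmin, Rmax; destruct (Rle_dec x y); intros; lra. Qed.

Lemma Icl_between_interior x y z : Icl x -> Icl y -> Rmin x y < z < Rmax x y -> -1 < z < 0.
Proof. unfold Icl, Rmin, Rmax; destruct (Rle_dec x y); intros; lra. Qed.

Lemma locally_Icl x : -1 < x < 0 -> locally x Icl.
Proof.
  intros Hx. assert (Hd : 0 < Rmin (x + 1) (- x)) by (apply Rmin_pos; lra).
  exists (mkposreal _ Hd). intros y Hy0.
  assert (Hy : Rabs (y - x) < Rmin (x + 1) (- x)) by exact Hy0.
  apply Rabs_def2 in Hy. unfold Icl. revert Hy; unfold Rmin; destruct (Rle_dec _ _); intros; lra.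
Qed.

Lemma locally_clamp_eq (f : R -> R) x : -1 < x < 0 -> locally x (fun y => f (clamp y) = f y).
Proof.
  intros Hx. apply (filter_imp Icl); [|exact (locally_Icl x Hx)].
  intros y Hy. rewrite clamp_id; auto.
Qed.

Lemma continuous_I_intro f :
  (forall x, Icl x -> forall eps, 0 < eps -> exists d, 0 < d /\
     forall y, Icl y -> Rabs (y - x) < d -> Rabs (f y - f x) < eps) -> continuous_I f.
Proof.
  intros H x. apply continuity_pt_locally. intros eps.
  destruct (H (clamp x) (Icl_clamp x) eps (cond_pos eps)) as [d [Hd Hy]].
  exists (mkposreal d Hd). intros u Hu. apply (Hy (clamp u)); [apply Icl_clamp|].
  eapply Rle_lt_trans; [apply clamp_1_lipschitz | exact Hu].
Qed.

Lemma continuous_I_of_continuous g : (forall x, continuity_pt g x) -> continuous_I g.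
Proof.
  intros Hg x. apply (continuity_pt_comp clamp g); [|apply Hg].
  apply continuity_pt_locally. intros eps. exists eps. intros y Hy.
  eapply Rle_lt_trans; [apply clamp_1_lipschitz | exact Hy].
Qed.

Lemma continuous_I_interior f x : continuous_I f -> -1 < x < 0 -> continuity_pt f x.
Proof.
  intros H Hx. apply continuity_pt_ext_loc with (fun y => f (clamp y)); [|apply H].
  apply locally_clamp_eq; auto.
Qed.

Lemma continuous_I_ext f g : (forall x, Icl x -> f x = g x) -> continuous_I f -> continuous_I g.
Proof.
  intros He Hf x. apply continuity_pt_ext with (fun y => f (clamp y)); auto.
  intros y. apply He, Icl_clamp.
Qed.

Lemma continuous_I_const c : continuous_I (fun _ => c).
Proof. intros x. apply continuity_pt_const. intros a b; reflexivity. Qed.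

Lemma continuous_I_plus f g : continuous_I f -> continuous_I g -> continuous_I (fun x => f x + g x).
Proof.
  intros Hf Hg x. apply (continuity_pt_plus (fun y => f (clamp y)) (fun y => g (clamp y))); auto.
Qed.

Lemma continuous_I_minus f g :
  continuous_I f -> continuous_I g -> continuous_I (fun x => f x - g x).
Proof.
  intros Hf Hg x. apply (continuity_pt_minus (fun y => f (clamp y)) (fun y => g (clamp y))); auto.
Qed.

Lemma continuous_I_mult f g : continuous_I f -> continuous_I g -> continuous_I (fun x => f x * g x).
Proof.
  intros Hf Hg x. apply (continuity_pt_mult (fun y => f (clamp y)) (fun y => g (clamp y))); auto.
Qed.

Lemma continuous_I_opp f : continuous_I f -> continuous_I (fun x => - f x).
Proof. intros Hf x. apply (continuity_pt_opp (fun y => f (clamp y))); auto. Qed.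

Lemma continuous_I_inv f :
  continuous_I f -> (forall x, Icl x -> f x <> 0) -> continuous_I (fun x => / f x).
Proof.
  intros Hf Hn x. apply (continuity_pt_inv (fun y => f (clamp y))); auto. apply Hn, Icl_clamp.
Qed.

Lemma continuous_I_pow f n : continuous_I f -> continuous_I (fun x => f x ^ n).
Proof.
  intros Hf. induction n as [|n IH]; simpl.
  - apply continuous_I_const.
  - apply continuous_I_mult; auto.
Qed.

Lemma continuous_I_inv_2sq f :
  continuous_I f -> (forall x, Icl x -> f x <> 0) -> continuous_I (fun x => / (2 * f x ^ 2)).
Proof.
  intros Cf Hn. apply continuous_I_inv.
  - apply continuous_I_mult; [apply continuous_I_const | apply continuous_I_pow; auto].
  - intros x Hx. apply Rmult_integral_contrapositive. split; [lra | apply pow_nonzero; auto].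
Qed.

Ltac continuous_I_tac :=
  repeat first [ assumption | apply continuous_I_plus | apply continuous_I_minus
               | apply continuous_I_mult | apply continuous_I_opp | apply continuous_I_const
               | apply continuous_I_inv_2sq; assumption ].

Lemma lipschitz_continuous_I f L :
  (forall x y, Icl x -> Icl y -> Rabs (f y - f x) <= L * Rabs (y - x)) -> continuous_I f.
Proof.
  intros H. apply continuous_I_intro. intros x Hx eps He.
  set (L' := Rabs L + 1). assert (HL : 0 < L') by (unfold L'; generalize (Rabs_pos L); lra).
  exists (eps / L'). split; [apply Rdiv_lt_0_compat; auto|].
  intros y Hy Hyx. eapply Rle_lt_trans; [apply H; auto|].
  apply Rle_lt_trans with (L' * Rabs (y - x)).
  - apply Rmult_le_compat_r; [apply Rabs_pos|]. unfold L'. generalize (Rle_abs L). lra.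
  - apply Rlt_le_trans with (L' * (eps / L')); [apply Rmult_lt_compat_l; auto|].
    right; field; lra.
Qed.

Lemma is_derive_I_eps f x l : is_derive_I f x l -> forall eps, 0 < eps ->
  exists d, 0 < d /\ forall y, Icl y -> y <> x -> Rabs (y - x) < d ->
    Rabs ((f y - f x) / (y - x) - l) < eps.
Proof.
  intros H eps He.
  destruct (proj1 (filterlim_locally _ _) H (mkposreal eps He)) as [d Hd].
  exists d; split; [apply cond_pos|].
  intros y Hy Hyx Hyd. apply (Hd y); [exact Hyd | split; assumption].
Qed.

Lemma is_derive_I_interior f x l : is_derive_I f x l -> -1 < x < 0 -> is_derive f x l.
Proof.
  intros H Hx. apply is_derive_Reals. intros eps He.
  destruct (is_derive_I_eps f x l H eps He) as [d [Hd Hy]].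
  assert (Hd' : 0 < Rmin d (Rmin (x + 1) (- x))) by (repeat apply Rmin_pos; lra).
  exists (mkposreal _ Hd'). intros h Hh Hhd. simpl in Hhd.
  assert (Hh1 := Rlt_le_trans _ _ _ Hhd (Rmin_l _ _)).
  assert (Hh2 := Rlt_le_trans _ _ _ Hhd (Rmin_r _ _)).
  assert (Hh3 := Rlt_le_trans _ _ _ Hh2 (Rmin_l _ _)).
  assert (Hh4 := Rlt_le_trans _ _ _ Hh2 (Rmin_r _ _)).
  replace h with (x + h - x) at 2 by ring.
  apply Hy.
  - apply Rabs_def2 in Hh3. apply Rabs_def2 in Hh4. unfold Icl. lra.
  - lra.
  - replace (x + h - x) with h by ring; auto.
Qed.

Lemma derive_on_I_interior f f' x : derive_on_I f f' -> -1 < x < 0 -> is_derive f x (f' x).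
Proof. intros H Hx. apply is_derive_I_interior; auto. apply H. unfold Icl; lra. Qed.

Lemma derive_on_I_continuous_I f f' : derive_on_I f f' -> continuous_I f.
Proof.
  intros H. apply continuous_I_intro. intros x Hx eps He.
  destruct (is_derive_I_eps f x (f' x) (H x Hx) 1 Rlt_0_1) as [d [Hd Hy]].
  set (C := Rabs (f' x) + 1).
  assert (HC : 0 < C) by (unfold C; generalize (Rabs_pos (f' x)); lra).
  exists (Rmin d (eps / C)). split; [apply Rmin_pos; auto; apply Rdiv_lt_0_compat; auto|].
  intros y Hy' Hyx. destruct (Req_dec y x) as [->|Hne].
  { rewrite Rminus_eq_0, Rabs_R0; auto. }
  assert (Hq := Hy y Hy' Hne (Rlt_le_trans _ _ _ Hyx (Rmin_l _ _))).
  assert (Hslope : Rabs ((f y - f x) / (y - x)) <= C).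
  { unfold C. replace ((f y - f x) / (y - x)) with (((f y - f x) / (y - x) - f' x) + f' x) by ring.
    eapply Rle_trans; [apply Rabs_triang | lra]. }
  replace (f y - f x) with ((f y - f x) / (y - x) * (y - x)) by (field; lra).
  rewrite Rabs_mult.
  assert (Hyx2 : Rabs (y - x) < eps / C) by (eapply Rlt_le_trans; [exact Hyx | apply Rmin_r]).
  apply Rle_lt_trans with (C * Rabs (y - x)); [apply Rmult_le_compat_r; auto; apply Rabs_pos|].
  apply Rlt_le_trans with (C * (eps / C)); [apply Rmult_lt_compat_l; auto|].
  right; field; lra.
Qed.

Lemma is_derive_Rmult (f g : R -> R) x df dg : is_derive f x df -> is_derive g x dg ->
  is_derive (fun y => f y * g y) x (df * g x + f x * dg).
Proof. intros Hf Hg. apply (is_derive_mult f g); auto. intros; apply Rmult_comm. Qed.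

Lemma bounded_continuous_I f : continuous_I f -> exists B, forall x, Icl x -> Rabs (f x) <= B.
Proof.
  intros H. destruct (continuity_ab_maj (fun x => Rabs (f (clamp x))) (-1) 0) as [m [Hm _]].
  - lra.
  - intros c _. apply (continuity_pt_comp (fun x => f (clamp x)) Rabs);
    [apply H | apply Rcontinuity_abs].
  - exists (Rabs (f (clamp m))). intros x Hx. specialize (Hm x Hx). simpl in Hm.
    rewrite clamp_id in Hm; auto.
Qed.

Lemma MVT_bound (f df : R -> R) L x y :
  (forall z, Rmin x y <= z <= Rmax x y -> is_derive f z (df z)) ->
  (forall z, Rmin x y <= z <= Rmax x y -> Rabs (df z) <= L) ->
  Rabs (f y - f x) <= L * Rabs (y - x).
Proof.
  intros Hd Hb.
  destruct (MVT_gen f x y df) as [c [Hc Heq]].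
  - intros z Hz. apply Hd; lra.
  - intros z Hz. apply continuity_pt_filterlim, (ex_derive_continuous (V:=R_NormedModule)).
    eexists. apply Hd; auto.
  - rewrite Heq, Rabs_mult. apply Rmult_le_compat_r; [apply Rabs_pos | apply Hb; auto].
Qed.

Lemma MVT_bound_I (f df : R -> R) L x y : Icl x -> Icl y -> continuous_I f ->
  (forall z, Rmin x y < z < Rmax x y -> is_derive f z (df z)) ->
  (forall z, Rmin x y <= z <= Rmax x y -> Rabs (df z) <= L) ->
  Rabs (f y - f x) <= L * Rabs (y - x).
Proof.
  intros Hx Hy Hf Hd Hb.
  destruct (MVT_gen (fun z => f (clamp z)) x y df) as [c [Hc Heq]].
  - intros z Hz. apply is_derive_ext_loc with f; [|apply Hd; auto].
    eapply filter_imp; [|apply (locally_clamp_eq f z)]; [intros; simpl; auto|].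
    exact (Icl_between_interior x y z Hx Hy Hz).
  - intros z _; apply Hf.
  - rewrite !clamp_id in Heq; auto. rewrite Heq, Rabs_mult.
    apply Rmult_le_compat_r; [apply Rabs_pos | apply Hb; auto].
Qed.

Lemma ex_RInt_I f a b : continuous_I f -> -1 <= a -> a <= b -> b <= 0 -> ex_RInt f a b.
Proof.
  intros H Ha Hab Hb. apply (ex_RInt_ext (V:=R_NormedModule) (fun y => f (clamp y))).
  { intros x Hx. rewrite Rmin_left in Hx by lra. rewrite Rmax_right in Hx by lra.
    rewrite clamp_id; auto. unfold Icl; lra. }
  apply (ex_RInt_continuous (V:=R_CompleteNormedModule)). intros z _.
  apply continuity_pt_filterlim. apply H.
Qed.

Lemma RInt_clamp_eq (f : R -> R) a b : -1 <= a -> a <= b -> b <= 0 ->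
  RInt (fun y => f (clamp y)) a b = RInt f a b.
Proof.
  intros Ha Hab Hb. apply RInt_ext. intros x Hx.
  rewrite Rmin_left, Rmax_right in Hx by lra. rewrite clamp_id; auto. unfold Icl; lra.
Qed.

Lemma is_derive_RInt_clamp f a x : continuous_I f ->
  is_derive (fun y => RInt (fun z => f (clamp z)) a y) x (f (clamp x)).
Proof.
  intros Cf. apply (is_derive_RInt (fun z => f (clamp z)) _ a x).
  - apply filter_forall. intros z. apply (RInt_correct (V:=R_CompleteNormedModule)).
    apply (ex_RInt_continuous (V:=R_CompleteNormedModule)). intros u _.
    apply continuity_pt_filterlim. apply Cf.
  - apply continuity_pt_filterlim. apply Cf.
Qed.

Lemma continuity_RInt_clamp f a x : continuous_I f ->
  continuity_pt (fun y => RInt (fun z => f (clamp z)) a y) x.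
Proof.
  intros Cf. apply continuity_pt_filterlim, (ex_derive_continuous (V:=R_NormedModule)).
  eexists. apply is_derive_RInt_clamp; auto.
Qed.

Lemma RInt_derive_I (P dP : R -> R) : continuous_I P -> continuous_I dP ->
  (forall x, -1 < x < 0 -> is_derive P x (dP x)) -> RInt dP (-1) 0 = P 0 - P (-1).
Proof.
  intros CP CdP HdP.
  set (E := fun x => RInt (fun y => dP (clamp y)) (-1) x - P (clamp x)).
  destruct (MVT_gen E (-1) 0 (fun _ => 0)) as [c [_ Hc]].
  - intros x Hx. rewrite Rmin_left, Rmax_right in Hx by lra. unfold E.
    replace 0 with (dP (clamp x) - dP x) by (rewrite clamp_id; [ring | unfold Icl; lra]).
    apply (is_derive_minus (V:=R_NormedModule)); [apply is_derive_RInt_clamp; auto|].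
    apply is_derive_ext_loc with P; [|apply HdP; auto].
    apply (filter_imp _ _ (fun y Hy => eq_sym Hy)), locally_clamp_eq; auto.
  - intros x _. unfold E. apply continuity_pt_minus; [apply continuity_RInt_clamp; auto | apply CP].
  - unfold E in Hc. rewrite (RInt_point (V:=R_CompleteNormedModule)), RInt_clamp_eq in Hc by lra.
    rewrite !clamp_id in Hc by (unfold Icl; lra).
    change (zero : R) with 0 in Hc. lra.
Qed.

Lemma continuity_pt_zero_left D a b :
  continuity_pt D b -> a < b -> (forall x, a < x < b -> D x = 0) -> D b = 0.
Proof.
  intros Hc Hab HD. destruct (Req_dec (D b) 0) as [|Hne]; auto. exfalso.
  destruct (proj1 (continuity_pt_locally _ _) Hc (mkposreal _ (Rabs_pos_lt _ Hne))) as [d Hd].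
  set (r := Rmin (d / 2) ((b - a) / 2)).
  assert (Hr : 0 < r) by (apply Rmin_pos; [generalize (cond_pos d) | ]; lra).
  assert (Hr1 := Rmin_l (d / 2) ((b - a) / 2)). assert (Hr2 := Rmin_r (d / 2) ((b - a) / 2)).
  specialize (Hd (b - r)). rewrite HD in Hd by (unfold r in *; lra). simpl in Hd.
  rewrite Rminus_0_l, Rabs_Ropp in Hd.
  assert (Rabs (D b) < Rabs (D b)); [|lra].
  apply Hd. change (Rabs (b - r - b) < d).
  replace (b - r - b) with (- r) by ring. rewrite Rabs_Ropp, Rabs_right by lra.
  generalize (cond_pos d); unfold r in *; lra.
Qed.

Lemma continuity_pt_zero_right D a b :
  continuity_pt D a -> a < b -> (forall x, a < x < b -> D x = 0) -> D a = 0.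
Proof.
  intros Hc Hab HD. rewrite <- (Ropp_involutive a).
  apply (continuity_pt_zero_left (fun x => D (- x)) (- b) (- a)); [|lra|].
  - apply (continuity_pt_comp Ropp D); [apply continuity_pt_opp, continuity_pt_id|].
    rewrite Ropp_involutive; auto.
  - intros x Hx. apply HD; lra.
Qed.

Lemma continuous_I_zero_of_interior f :
  continuous_I f -> (forall x, -1 < x < 0 -> f x = 0) -> forall x, Icl x -> f x = 0.
Proof.
  intros Cf Hf x Hx.
  assert (Hcl : forall y, -1 < y < 0 -> f (clamp y) = 0).
  { intros y Hy. rewrite clamp_id by (unfold Icl; lra). auto. }
  rewrite <- (clamp_id x Hx).
  destruct (Req_dec x 0) as [->|Hx0]; [|destruct (Req_dec x (-1)) as [->|Hx1]].
  - apply (continuity_pt_zero_left (fun y => f (clamp y)) (-1)); auto; lra.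
  - apply (continuity_pt_zero_right (fun y => f (clamp y)) (-1) 0); auto; lra.
  - apply Hcl. unfold Icl in Hx; lra.
Qed.

Lemma RInt_le_0 (f : R -> R) a b : a <= b -> ex_RInt f a b ->
  (forall x, a < x < b -> f x <= 0) -> RInt f a b <= 0.
Proof.
  intros Hab Hex Hf.
  assert (Hopp : 0 <= RInt (fun x => opp (f x)) a b).
  { apply RInt_ge_0; auto; [apply (ex_RInt_opp (V:=R_NormedModule)); auto|].
    intros x Hx. specialize (Hf x Hx). unfold opp; simpl; lra. }
  rewrite (RInt_opp (V:=R_CompleteNormedModule)) in Hopp by exact Hex.
  unfold opp in Hopp; simpl in Hopp. lra.
Qed.

Lemma RInt_eq0_nonneg_I c : continuous_I c -> (forall x, -1 < x < 0 -> 0 <= c x) ->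
  RInt c (-1) 0 = 0 -> forall x, Icl x -> c x = 0.
Proof.
  intros Cc Hpos Hint. apply continuous_I_zero_of_interior; auto. intros x0 Hx0.
  destruct (Req_dec (c x0) 0) as [|Hne]; auto. exfalso.
  assert (Hp : 0 < c x0 / 2) by (specialize (Hpos x0 Hx0); lra).
  destruct (proj1 (continuity_pt_locally _ _) (continuous_I_interior c x0 Cc Hx0) (mkposreal _ Hp))
    as [d Hd].
  set (r := Rmin (d / 2) (Rmin ((x0 + 1) / 2) (- x0 / 2))).
  assert (Hr : 0 < r) by (unfold r; repeat apply Rmin_pos; generalize (cond_pos d); lra).
  assert (Hr1 := Rmin_l (d / 2) (Rmin ((x0 + 1) / 2) (- x0 / 2))).
  assert (Hr2 := Rmin_r (d / 2) (Rmin ((x0 + 1) / 2) (- x0 / 2))).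
  assert (Hr3 := Rmin_l ((x0 + 1) / 2) (- x0 / 2)).
  assert (Hr4 := Rmin_r ((x0 + 1) / 2) (- x0 / 2)). fold r in Hr1, Hr2.
  set (l := x0 - r). set (u := x0 + r).
  assert (E1 : ex_RInt c (-1) l) by (apply ex_RInt_I; auto; unfold l; lra).
  assert (E2 : ex_RInt c l u) by (apply ex_RInt_I; auto; unfold l, u; lra).
  assert (E3 : ex_RInt c u 0) by (apply ex_RInt_I; auto; unfold u; lra).
  assert (I1 : 0 <= RInt c (-1) l).
  { apply RInt_ge_0; auto; [unfold l; lra|]. intros x Hx. apply Hpos. unfold l in Hx; lra. }
  assert (I3 : 0 <= RInt c u 0).
  { apply RInt_ge_0; auto; [unfold u; lra|]. intros x Hx. apply Hpos. unfold u in Hx; lra. }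
  assert (I2 : 0 < RInt c l u).
  { apply RInt_gt_0; [unfold l, u; lra| |].
    - intros x Hx. assert (Hdx : Rabs (c x - c x0) < c x0 / 2).
      { apply Hd. change (Rabs (x - x0) < d). apply Rabs_def1; unfold l, u in Hx;
        generalize (cond_pos d); lra. }
      apply Rabs_def2 in Hdx. lra.
    - intros x Hx. apply continuity_pt_filterlim, continuous_I_interior; auto.
      unfold l, u in Hx; lra. }
  rewrite <- (RInt_Chasles (V:=R_CompleteNormedModule) c (-1) l 0) in Hint; auto.
  - rewrite <- (RInt_Chasles (V:=R_CompleteNormedModule) c l u 0) in Hint; auto.
    change (RInt c (-1) l + (RInt c l u + RInt c u 0) = 0) in Hint. lra.
  - apply (ex_RInt_Chasles (V:=R_CompleteNormedModule) c l u 0); auto.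
Qed.

(** * Convergence as [q -> +oo] *)

Definition cvg_pinfty (u : R -> R) (l : R) : Prop :=
  forall eps, 0 < eps -> exists T, forall t, T <= t -> Rabs (u t - l) < eps.

Definition ucvg_pinfty_I (u : R -> R -> R) (K : R -> R) : Prop :=
  forall eps, 0 < eps -> exists T, forall t, T <= t -> forall x, Icl x -> Rabs (u t x - K x) < eps.

Lemma nat_above T : exists N : nat, forall n, (N <= n)%nat -> T <= INR n.
Proof.
  destruct (archimed T) as [H1 _].
  exists (Z.to_nat (up T)). intros n Hn.
  apply le_INR in Hn. rewrite INR_IZR_INZ in Hn.
  destruct (Z.lt_ge_cases (up T) 0) as [Hz|Hz].
  - apply IZR_lt in Hz. generalize (pos_INR n). lra.
  - rewrite Z2Nat.id in Hn by lia. lra.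
Qed.

Lemma floor_nat (m : nat) z : 0 <= z < INR m -> exists k, (k < m)%nat /\ INR k <= z < INR k + 1.
Proof.
  revert z; induction m as [|m IH]; intros z Hz.
  - simpl in Hz; lra.
  - destruct (Rlt_dec z (INR m)) as [Hl|Hl].
    + destruct (IH z) as [k [Hk1 Hk2]]; [lra|]. exists k; split; auto.
    + exists m. rewrite S_INR in Hz. split; [lia | lra].
Qed.

Lemma cvg_pinfty_seq (u : R -> R) l (xi : nat -> R) :
  cvg_pinfty u l -> (forall n, INR n <= xi n) -> is_lim_seq (fun n => u (xi n)) l.
Proof.
  intros Hu Hx. apply is_lim_seq_spec. intros eps.
  destruct (Hu eps (cond_pos eps)) as [T HT]. destruct (nat_above T) as [N HN].
  exists N. intros n Hn. apply HT. eapply Rle_trans; [apply HN, Hn | apply Hx].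
Qed.

Lemma cvg_pinfty_of_approx (u : R -> R) :
  (forall eps, 0 < eps -> exists c T, forall t, T <= t -> Rabs (u t - c) <= eps) ->
  exists l, cvg_pinfty u l.
Proof.
  intros H.
  assert (Hc : ex_lim_seq_cauchy (fun n => u (INR n))).
  { intros eps. destruct (H (eps / 3)) as [c [T HT]]; [destruct eps; simpl; lra|].
    destruct (nat_above T) as [N HN]. exists N. intros n m Hn Hm.
    specialize (HT _ (HN _ Hn)) as H1. specialize (HT _ (HN _ Hm)) as H2.
    pose proof (cond_pos eps).
    replace (u (INR n) - u (INR m)) with ((u (INR n) - c) - (u (INR m) - c)) by ring.
    eapply Rle_lt_trans; [apply Rabs_triang|]. rewrite Rabs_Ropp. lra. }
  apply ex_lim_seq_cauchy_corr in Hc. destruct Hc as [l Hl].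
  exists l. intros eps He.
  destruct (H (eps / 3)) as [c [T HT]]; [lra|].
  apply is_lim_seq_spec in Hl. destruct (Hl (mkposreal (eps / 3) ltac:(lra))) as [N1 HN1].
  destruct (nat_above T) as [N HN].
  exists T. intros t Ht.
  specialize (HN1 (max N N1) ltac:(lia)). simpl in HN1.
  specialize (HT _ (HN _ (Nat.le_max_l N N1))) as H2.
  specialize (HT t Ht) as H1.
  replace (u t - l) with ((u t - c) - (u (INR (max N N1)) - c) + (u (INR (max N N1)) - l)) by ring.
  eapply Rle_lt_trans; [apply Rabs_triang|].
  eapply Rle_lt_trans; [apply Rplus_le_compat_r, Rabs_triang|]. rewrite Rabs_Ropp. lra.
Qed.

Definition grid (N k : nat) : R := - INR k / INR N.

Lemma Icl_grid N k : (0 < N)%nat -> (k <= N)%nat -> Icl (grid N k).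
Proof.
  intros HN0 Hk. assert (HN : 0 < INR N) by (apply lt_0_INR; lia).
  apply le_INR in Hk. generalize (pos_INR k). intros.
  unfold grid, Icl, Rdiv. split.
  - apply Rmult_le_reg_r with (INR N); auto. rewrite Rmult_assoc, Rinv_l by lra. lra.
  - rewrite Ropp_mult_distr_l_reverse.
    assert (0 <= INR k * / INR N) by (apply Rmult_le_pos; auto; left; apply Rinv_0_lt_compat; auto).
    lra.
Qed.

Lemma grid_near N x : (0 < N)%nat -> Icl x ->
  exists k, (k <= N)%nat /\ Rabs (grid N k - x) <= / INR N.
Proof.
  intros HN0 Hx. assert (HN : 0 < INR N) by (apply lt_0_INR; lia). unfold grid.
  destruct (Req_dec x (-1)) as [->|Hx1].
  - exists N. split; auto. replace (- INR N / INR N - -1) with 0 by (field; lra).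
    rewrite Rabs_R0. left; apply Rinv_0_lt_compat; auto.
  - destruct (floor_nat N (- x * INR N)) as [k [Hk1 Hk2]].
    { unfold Icl in Hx. split; [apply Rmult_le_pos; lra|].
      replace (INR N) with (1 * INR N) at 2 by ring. apply Rmult_lt_compat_r; lra. }
    exists k. split; [lia|].
    replace (- INR k / INR N - x) with ((- x * INR N - INR k) * / INR N) by (field; lra).
    rewrite Rabs_mult, (Rabs_right (/ INR N)) by (left; apply Rinv_0_lt_compat; auto).
    rewrite <- (Rmult_1_l (/ INR N)) at 2.
    apply Rmult_le_compat_r; [left; apply Rinv_0_lt_compat; auto|].
    rewrite Rabs_right; lra.
Qed.

Lemma cvg_pinfty_finite (u : nat -> R -> R) (l : nat -> R) N eps : 0 < eps ->
  (forall k, (k <= N)%nat -> cvg_pinfty (u k) (l k)) ->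
  exists T, forall k, (k <= N)%nat -> forall t, T <= t -> Rabs (u k t - l k) < eps.
Proof.
  intros He Hu. induction N as [|N IH].
  - destruct (Hu 0%nat (Nat.le_refl 0) eps He) as [T HT].
    exists T. intros k Hk t Ht. replace k with 0%nat by lia. auto.
  - destruct IH as [T1 HT1]; [intros k Hk; apply Hu; lia|].
    destruct (Hu (S N) (Nat.le_refl _) eps He) as [T2 HT2].
    exists (Rmax T1 T2). intros k Hk t Ht.
    destruct (Nat.eq_dec k (S N)) as [->|Hne].
    + apply HT2. eapply Rle_trans; [apply Rmax_r | exact Ht].
    + apply HT1; [lia|]. eapply Rle_trans; [apply Rmax_l | exact Ht].
Qed.

Lemma equilipschitz_ucvg (u : R -> R -> R) (K : R -> R) L : 0 <= L ->
  (forall t x y, Icl x -> Icl y -> Rabs (u t y - u t x) <= L * Rabs (y - x)) ->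
  (forall x y, Icl x -> Icl y -> Rabs (K y - K x) <= L * Rabs (y - x)) ->
  (forall x, Icl x -> cvg_pinfty (fun t => u t x) (K x)) -> ucvg_pinfty_I u K.
Proof.
  intros HL Hu HK Hp eps He.
  destruct (nat_above (4 * L / eps + 1)) as [N0 HN0].
  set (N := S N0).
  assert (HN : (0 < N)%nat) by (unfold N; lia).
  assert (HNpos : 0 < INR N) by (apply lt_0_INR; auto).
  assert (HNbig : 4 * L / eps + 1 <= INR N) by (apply HN0; unfold N; lia).
  destruct (cvg_pinfty_finite (fun k t => u t (grid N k)) (fun k => K (grid N k)) N (eps / 2))
    as [T HT]; [lra | intros k Hk; apply Hp, Icl_grid; auto|].
  exists T. intros t Ht x Hx.
  destruct (grid_near N x HN Hx) as [k [Hk Hdk]].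
  specialize (HT k Hk t Ht). simpl in HT.
  assert (Hg := Icl_grid N k HN Hk).
  assert (H1 := Hu t (grid N k) x Hg Hx).
  assert (H2 := HK x (grid N k) Hx Hg).
  assert (HLN : L * / INR N <= eps / 4).
  { apply Rmult_le_reg_r with (INR N); auto. rewrite Rmult_assoc, Rinv_l by lra.
    assert (L <= eps / 4 * (4 * L / eps)) by (right; field; lra).
    assert (0 <= eps / 4) by lra. nra. }
  assert (Hd1 : L * Rabs (x - grid N k) <= eps / 4).
  { rewrite <- Rabs_Ropp, Ropp_minus_distr. eapply Rle_trans; [|exact HLN].
    apply Rmult_le_compat_l; auto. }
  assert (Hd2 : L * Rabs (grid N k - x) <= eps / 4).
  { eapply Rle_trans; [|exact HLN]. apply Rmult_le_compat_l; auto. }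
  replace (u t x - K x)
    with ((u t x - u t (grid N k)) + (u t (grid N k) - K (grid N k)) + (K (grid N k) - K x))
    by ring.
  eapply Rle_lt_trans; [apply Rabs_triang|].
  eapply Rle_lt_trans; [apply Rplus_le_compat_r, Rabs_triang|].
  lra.
Qed.

(** * The limiting profile of a bounded C^2 family *)

Set Implicit Arguments.

Record bounded_C2 (g gq gp gqq gpp : R -> R -> R) (M : R) : Prop := {
  bC2_bound_ge0 : 0 <= M;
  bC2_dq : forall t p, Icl p -> is_derive (fun u => g u p) t (gq t p);
  bC2_dqq : forall t p, Icl p -> is_derive (fun u => gq u p) t (gqq t p);
  bC2_dp : forall t p, Icl p -> is_derive_I (g t) p (gp t p);
  bC2_dpp : forall t p, Icl p -> is_derive_I (gp t) p (gpp t p);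
  bC2_bound_qq : forall t p, Icl p -> Rabs (gqq t p) <= M;
  bC2_bound_pp : forall t p, Icl p -> Rabs (gpp t p) <= M;
  bC2_bound_p : forall t p, Icl p -> Rabs (gp t p) <= M }.

Unset Implicit Arguments.

Lemma exists_interior_at_dist x s : Icl x -> 0 < s <= 1/4 ->
  exists y, -1 < y < 0 /\ Rabs (y - x) = s.
Proof.
  intros Hx Hs. unfold Icl in Hx. destruct (Rlt_dec x (-1/2)).
  - exists (x + s). split; [lra|]. replace (x + s - x) with s by ring. apply Rabs_right; lra.
  - exists (x - s). split; [lra|]. replace (x - s - x) with (- s) by ring.
    rewrite Rabs_Ropp. apply Rabs_right; lra.
Qed.

Lemma small_step M eps : 0 <= M -> 0 < eps -> exists s, 0 < s <= 1/4 /\ M * s <= eps.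
Proof.
  intros HM He. exists (Rmin (1/4) (eps / (M + 1))).
  assert (Hs : 0 < eps / (M + 1)) by (apply Rdiv_lt_0_compat; lra).
  split; [split; [apply Rmin_pos; lra | apply Rmin_l]|].
  apply Rle_trans with (M * (eps / (M + 1))); [apply Rmult_le_compat_l; auto; apply Rmin_r|].
  apply Rmult_le_reg_r with (M + 1); [lra|].
  replace (M * (eps / (M + 1)) * (M + 1)) with (M * eps) by (field; lra). nra.
Qed.

Section LimitProfile.

Variables (g gq gp gqq gpp : R -> R -> R) (M : R) (K : R -> R).
Hypothesis HB : bounded_C2 g gq gp gqq gpp M.
Hypothesis HK : forall p, Icl p -> cvg_pinfty (fun t => g t p) (K p).

Lemma continuous_I_g t : continuous_I (g t).
Proof. apply (derive_on_I_continuous_I _ (gp t)). intros z Hz. apply (bC2_dp HB); auto. Qed.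

Lemma continuous_I_gp t : continuous_I (gp t).
Proof. apply (derive_on_I_continuous_I _ (gpp t)). intros z Hz. apply (bC2_dpp HB); auto. Qed.

Lemma g_lipschitz_p t x y : Icl x -> Icl y -> Rabs (g t y - g t x) <= M * Rabs (y - x).
Proof.
  intros Hx Hy. apply (MVT_bound_I (g t) (gp t)); auto using continuous_I_g.
  - intros z Hz. apply is_derive_I_interior; [|exact (Icl_between_interior x y z Hx Hy Hz)].
    apply (bC2_dp HB). apply (Icl_between x y); auto; lra.
  - intros z Hz. apply (bC2_bound_p HB). apply (Icl_between x y); auto.
Qed.

Lemma gp_lipschitz_p t x y : Icl x -> Icl y -> Rabs (gp t y - gp t x) <= M * Rabs (y - x).
Proof.
  intros Hx Hy. apply (MVT_bound_I (gp t) (gpp t)); auto using continuous_I_gp.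
  - intros z Hz. apply is_derive_I_interior; [|exact (Icl_between_interior x y z Hx Hy Hz)].
    apply (bC2_dpp HB). apply (Icl_between x y); auto; lra.
  - intros z Hz. apply (bC2_bound_pp HB). apply (Icl_between x y); auto.
Qed.

Lemma g_taylor_p t x y : Icl x -> Icl y ->
  Rabs (g t y - g t x - (y - x) * gp t x) <= M * Rabs (y - x) * Rabs (y - x).
Proof.
  intros Hx Hy.
  replace (g t y - g t x - (y - x) * gp t x)
    with ((g t y - y * gp t x) - (g t x - x * gp t x)) by ring.
  apply (MVT_bound_I (fun z => g t z - z * gp t x) (fun z => gp t z - gp t x)); auto.
  - apply continuous_I_minus; [apply continuous_I_g|].
    apply continuous_I_mult; [|apply continuous_I_const].
    apply (lipschitz_continuous_I _ 1). intros; lra.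
  - intros z Hz. apply (is_derive_minus (V:=R_NormedModule)).
    + apply is_derive_I_interior; [|exact (Icl_between_interior x y z Hx Hy Hz)].
      apply (bC2_dp HB). apply (Icl_between x y); auto; lra.
    + auto_derive; auto; ring.
  - intros z Hz. eapply Rle_trans; [apply gp_lipschitz_p; auto; apply (Icl_between x y); auto|].
    apply Rmult_le_compat_l; [apply (bC2_bound_ge0 HB)|].
    revert Hz. unfold Rmin, Rmax; destruct (Rle_dec x y); intros;
    unfold Rabs; repeat destruct Rcase_abs; lra.
Qed.

Lemma g_taylor_q t s p : Icl p ->
  Rabs (g (t + s) p - g t p - s * gq t p) <= M * Rabs s * Rabs s.
Proof.
  intros Hp.
  replace (g (t + s) p - g t p - s * gq t p)
    with ((g (t + s) p - (t + s) * gq t p) - (g t p - t * gq t p)) by ring.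
  replace (M * Rabs s * Rabs s) with (M * Rabs s * Rabs ((t + s) - t))
    by (replace (t + s - t) with s by ring; ring).
  apply (MVT_bound (fun u => g u p - u * gq t p) (fun u => gq u p - gq t p)).
  - intros z Hz. apply (is_derive_minus (V:=R_NormedModule)); [apply (bC2_dq HB); auto|].
    auto_derive; auto; ring.
  - intros z Hz. eapply Rle_trans.
    + apply (MVT_bound (fun u => gq u p) (fun u => gqq u p) M t z).
      * intros w Hw. apply (bC2_dqq HB); auto.
      * intros w Hw. apply (bC2_bound_qq HB); auto.
    + apply Rmult_le_compat_l; [apply (bC2_bound_ge0 HB)|].
      revert Hz. unfold Rmin, Rmax; destruct (Rle_dec t (t + s)); intros;
      unfold Rabs; repeat destruct Rcase_abs; lra.
Qed.

Lemma K_lipschitz x y : Icl x -> Icl y -> Rabs (K y - K x) <= M * Rabs (y - x).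
Proof.
  intros Hx Hy. apply le_epsilon. intros e He.
  destruct (HK x Hx (e / 2)) as [T1 H1]; [lra|].
  destruct (HK y Hy (e / 2)) as [T2 H2]; [lra|].
  set (t := Rmax T1 T2).
  specialize (H1 t (Rmax_l _ _)). specialize (H2 t (Rmax_r _ _)).
  assert (H3 := g_lipschitz_p t x y Hx Hy).
  replace (K y - K x) with (- (g t y - K y) + (g t y - g t x) + (g t x - K x)) by ring.
  generalize (Rabs_triang (- (g t y - K y) + (g t y - g t x)) (g t x - K x)),
    (Rabs_triang (- (g t y - K y)) (g t y - g t x)).
  rewrite Rabs_Ropp. lra.
Qed.

Lemma continuous_I_K : continuous_I K.
Proof. apply (lipschitz_continuous_I K M). intros; apply K_lipschitz; auto. Qed.

Lemma g_ucvg : ucvg_pinfty_I g K.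
Proof.
  apply (equilipschitz_ucvg g K M); auto.
  - apply (bC2_bound_ge0 HB).
  - intros t x y Hx Hy. apply g_lipschitz_p; auto.
  - intros x y Hx Hy. apply K_lipschitz; auto.
Qed.

(* [gq t = ((g (t+s) - K) - (g t - K) - Taylor remainder) / s]: take [s] small, then [t] large. *)
Lemma gq_ucvg0 : ucvg_pinfty_I gq (fun _ => 0).
Proof.
  intros eps He. assert (HM := bC2_bound_ge0 HB).
  set (s := eps / (2 * (M + 1))).
  assert (Hs : 0 < s) by (unfold s; apply Rdiv_lt_0_compat; lra).
  assert (HMs : M * s < eps / 2).
  { unfold s. apply Rmult_lt_reg_r with (2 * (M + 1)); [lra|].
    replace (M * (eps / (2 * (M + 1))) * (2 * (M + 1))) with (M * eps) by (field; lra).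
    replace (eps / 2 * (2 * (M + 1))) with (M * eps + eps) by field. lra. }
  destruct (g_ucvg (eps * s / 8)) as [T HT].
  { assert (0 < eps * s) by (apply Rmult_lt_0_compat; lra); lra. }
  exists T. intros t Ht x Hx. rewrite Rminus_0_r.
  assert (H1 := HT t Ht x Hx). assert (H2 := HT (t + s) ltac:(lra) x Hx).
  assert (H3 := g_taylor_q t s x Hx).
  rewrite (Rabs_right s) in H3 by lra.
  replace (gq t x)
    with ((- (g (t + s) x - g t x - s * gq t x) + (g (t + s) x - K x) + - (g t x - K x)) * / s)
    by (field; lra).
  rewrite Rabs_mult, (Rabs_right (/ s)) by (left; apply Rinv_0_lt_compat; auto).
  apply Rmult_lt_reg_r with s; auto. rewrite Rmult_assoc, Rinv_l, Rmult_1_r by lra.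
  eapply Rle_lt_trans; [apply Rabs_triang|].
  eapply Rle_lt_trans; [apply Rplus_le_compat_r, Rabs_triang|]. rewrite !Rabs_Ropp.
  assert (M * s * s < eps / 2 * s) by (apply Rmult_lt_compat_r; auto).
  nra.
Qed.

Definition slope_limit (x : R) : R := real (Lim_seq (fun n => gp (INR n) x)).

(* [gp t x] is within [M s] of the difference quotient of [g t] over a step [s],
   which converges to that of [K]; so [gp t x] is Cauchy as [t -> +oo]. *)
Lemma gp_cvg x : Icl x -> cvg_pinfty (fun t => gp t x) (slope_limit x).
Proof.
  intros Hx. assert (HM := bC2_bound_ge0 HB).
  destruct (cvg_pinfty_of_approx (fun t => gp t x)) as [l Hl].
  { intros eps He.
    destruct (small_step M (eps / 2) HM ltac:(lra)) as [s [Hs HMs]].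
    destruct (exists_interior_at_dist x s Hx Hs) as [y [Hy Hys]].
    assert (Hy' : Icl y) by (unfold Icl; lra).
    assert (Hyx : y - x <> 0) by (intro E; rewrite E, Rabs_R0 in Hys; lra).
    exists ((K y - K x) / (y - x)).
    assert (Hes : 0 < eps * s / 4) by (assert (0 < eps * s) by (apply Rmult_lt_0_compat; lra); lra).
    destruct (HK x Hx _ Hes) as [T1 H1]. destruct (HK y Hy' _ Hes) as [T2 H2].
    exists (Rmax T1 T2). intros t Ht.
    specialize (H1 t (Rle_trans _ _ _ (Rmax_l _ _) Ht)).
    specialize (H2 t (Rle_trans _ _ _ (Rmax_r _ _) Ht)).
    assert (H3 := g_taylor_p t x y Hx Hy'). rewrite Hys in H3.
    replace (gp t x - (K y - K x) / (y - x))
      with ((- (g t y - g t x - (y - x) * gp t x) + (g t y - K y) + - (g t x - K x)) / (y - x))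
      by (field; auto).
    unfold Rdiv. rewrite Rabs_mult, Rabs_inv, Hys.
    apply Rmult_le_reg_r with s; [lra|]. rewrite Rmult_assoc, Rinv_l, Rmult_1_r by lra.
    eapply Rle_trans; [apply Rabs_triang|].
    eapply Rle_trans; [apply Rplus_le_compat_r, Rabs_triang|]. rewrite !Rabs_Ropp.
    assert (M * s * s <= eps / 2 * s) by (apply Rmult_le_compat_r; lra).
    lra. }
  assert (Hseq : is_lim_seq (fun n => gp (INR n) x) l).
  { apply (cvg_pinfty_seq (fun t => gp t x) l INR Hl). intros; lra. }
  unfold slope_limit. rewrite (is_lim_seq_unique _ _ Hseq). exact Hl.
Qed.

Lemma K_taylor x y : Icl x -> Icl y ->
  Rabs (K y - K x - (y - x) * slope_limit x) <= M * Rabs (y - x) * Rabs (y - x).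
Proof.
  intros Hx Hy. apply le_epsilon. intros e He.
  destruct (HK x Hx (e / 4)) as [T1 H1]; [lra|].
  destruct (HK y Hy (e / 4)) as [T2 H2]; [lra|].
  destruct (gp_cvg x Hx (e / 4)) as [T3 H3]; [lra|].
  set (t := Rmax T1 (Rmax T2 T3)).
  specialize (H1 t (Rmax_l _ _)).
  specialize (H2 t (Rle_trans _ _ _ (Rmax_l _ _) (Rmax_r _ _))).
  specialize (H3 t (Rle_trans _ _ _ (Rmax_r _ _) (Rmax_r _ _))).
  assert (H4 := g_taylor_p t x y Hx Hy).
  assert (Hyx : Rabs (y - x) <= 1) by (unfold Icl in *; unfold Rabs; destruct Rcase_abs; lra).
  assert (H5 : Rabs ((y - x) * (gp t x - slope_limit x)) <= e / 4).
  { rewrite Rabs_mult. apply Rle_trans with (1 * (e / 4)); [|lra].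
    apply Rmult_le_compat; auto using Rabs_pos; lra. }
  replace (K y - K x - (y - x) * slope_limit x) with
    (- (g t y - K y) + (g t x - K x) + (g t y - g t x - (y - x) * gp t x)
     + (y - x) * (gp t x - slope_limit x)) by ring.
  set (a := - (g t y - K y)) in *. set (b := g t x - K x) in *.
  set (c := g t y - g t x - (y - x) * gp t x) in *.
  set (d := (y - x) * (gp t x - slope_limit x)) in *.
  generalize (Rabs_triang (a + b + c) d), (Rabs_triang (a + b) c), (Rabs_triang a b).
  unfold a. rewrite Rabs_Ropp. lra.
Qed.

Lemma slope_limit_lipschitz x y : Icl x -> Icl y ->
  Rabs (slope_limit y - slope_limit x) <= M * Rabs (y - x).
Proof.
  intros Hx Hy. apply le_epsilon. intros e He.
  destruct (gp_cvg x Hx (e / 2)) as [T1 H1]; [lra|].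
  destruct (gp_cvg y Hy (e / 2)) as [T2 H2]; [lra|].
  set (t := Rmax T1 T2).
  specialize (H1 t (Rmax_l _ _)). specialize (H2 t (Rmax_r _ _)).
  assert (H3 := gp_lipschitz_p t x y Hx Hy).
  replace (slope_limit y - slope_limit x)
    with (- (gp t y - slope_limit y) + (gp t y - gp t x) + (gp t x - slope_limit x)) by ring.
  generalize
    (Rabs_triang (- (gp t y - slope_limit y) + (gp t y - gp t x)) (gp t x - slope_limit x)),
    (Rabs_triang (- (gp t y - slope_limit y)) (gp t y - gp t x)).
  rewrite Rabs_Ropp. lra.
Qed.

Lemma continuous_I_slope_limit : continuous_I slope_limit.
Proof. apply (lipschitz_continuous_I _ M). intros; apply slope_limit_lipschitz; auto. Qed.

Lemma K_derive x : -1 < x < 0 -> is_derive K x (slope_limit x).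
Proof.
  intros Hx. assert (HM := bC2_bound_ge0 HB).
  apply is_derive_Reals. intros eps He.
  assert (Hd : 0 < Rmin (eps / (M + 1)) (Rmin (x + 1) (- x)))
    by (repeat apply Rmin_pos; try lra; apply Rdiv_lt_0_compat; lra).
  exists (mkposreal _ Hd). intros h Hh Hhd. simpl in Hhd.
  assert (Hh1 := Rlt_le_trans _ _ _ Hhd (Rmin_l _ _)).
  assert (Hh2 := Rlt_le_trans _ _ _ Hhd (Rmin_r _ _)).
  assert (Hh3 := Rlt_le_trans _ _ _ Hh2 (Rmin_l _ _)).
  assert (Hh4 := Rlt_le_trans _ _ _ Hh2 (Rmin_r _ _)).
  assert (Hxh : Icl (x + h)) by (apply Rabs_def2 in Hh3; apply Rabs_def2 in Hh4; unfold Icl; lra).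
  assert (H := K_taylor x (x + h) ltac:(unfold Icl; lra) Hxh).
  replace (x + h - x) with h in H by ring.
  assert (Hap : 0 < Rabs h) by (apply Rabs_pos_lt; auto).
  replace ((K (x + h) - K x) / h - slope_limit x)
    with ((K (x + h) - K x - h * slope_limit x) / h) by (field; auto).
  unfold Rdiv. rewrite Rabs_mult, Rabs_inv.
  apply Rmult_lt_reg_r with (Rabs h); auto. rewrite Rmult_assoc, Rinv_l, Rmult_1_r by lra.
  eapply Rle_lt_trans; [exact H|].
  apply Rmult_lt_compat_r; auto.
  apply Rle_lt_trans with ((M + 1) * Rabs h); [apply Rmult_le_compat_r; lra|].
  apply Rlt_le_trans with ((M + 1) * (eps / (M + 1))); [apply Rmult_lt_compat_l; lra|].
  right; field; lra.
Qed.

Variable delta : R.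
Hypothesis Hdelta : forall t p, -1 < p < 0 -> delta <= gp t p.

Lemma slope_limit_ge x : Icl x -> delta <= slope_limit x.
Proof.
  intros Hx. assert (HM := bC2_bound_ge0 HB).
  assert (Hint : forall y, -1 < y < 0 -> delta <= slope_limit y).
  { intros y Hy. apply le_epsilon. intros e He.
    destruct (gp_cvg y ltac:(unfold Icl; lra) e He) as [T HT].
    specialize (HT T (Rle_refl _)). specialize (Hdelta T y Hy).
    apply Rabs_def2 in HT. lra. }
  apply le_epsilon. intros e He.
  destruct (small_step M e HM He) as [s [Hs HMs]].
  destruct (exists_interior_at_dist x s Hx Hs) as [y [Hy Hys]].
  assert (H2 := slope_limit_lipschitz x y Hx ltac:(unfold Icl; lra)).
  rewrite Hys in H2. generalize (Hint y Hy), (Rle_abs (slope_limit y - slope_limit x)). lra.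
Qed.

End LimitProfile.

(** * Passing to the limit in the height equation *)

Definition phi_dev (a H1 : R -> R) (p : R) : R := / (2 * a p ^ 2) - / (2 * H1 p ^ 2).

Definition source (rho1 H : R -> R) (F : R) (K : R -> R) (p : R) : R :=
  / F^2 * rho1 p * (K p - H p).

Lemma continuous_I_source rho1 H F K :
  continuous_I rho1 -> continuous_I H -> continuous_I K -> continuous_I (source rho1 H F K).
Proof. intros. unfold source. continuous_I_tac. Qed.

Set Implicit Arguments.

Record height_flow (g gq gp gqq gpq : R -> R -> R) (rho rho1 H H1 : R -> R) (F delta : R) :
  Prop := {
  hf_delta_pos : 0 < delta;
  hf_gp_ge : forall t p, -1 < p < 0 -> delta <= gp t p;
  hf_dpq : forall t p, Icl p -> is_derive (fun u => gp u p) t (gpq t p);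
  hf_cont_q : forall t p, -1 < p < 0 -> continuity_2d_pt gq t p;
  hf_cont_p : forall t p, -1 < p < 0 -> continuity_2d_pt gp t p;
  hf_cont_qq : forall t p, -1 < p < 0 -> continuity_2d_pt gqq t p;
  hf_cont_pq : forall t p, -1 < p < 0 -> continuity_2d_pt gpq t p;
  hf_interior : forall t p, -1 < p < 0 -> exists A B,
    is_derive (fun p' => - (1 + (gq t p')^2) / (2 * (gp t p')^2) + / (2 * (H1 p')^2)) p A /\
    is_derive (fun u => gq u p / gp u p) t B /\
    A + B - / F^2 * rho1 p * (g t p - H p) = 0;
  hf_top : forall t,
    (1 + (gq t 0)^2) / (2 * (gp t 0)^2) - / (2 * (H1 0)^2) + / F^2 * rho 0 * (g t 0 - 1) = 0 }.

Unset Implicit Arguments.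

Lemma continuity_2d_pt_snd f x y : continuity_2d_pt f x y -> continuity_pt (fun v => f x v) y.
Proof.
  intros H. apply continuity_pt_locally. intros eps.
  destruct (H eps) as [d Hd]. exists d. intros v Hv. apply Hd; [|exact Hv].
  rewrite Rminus_eq_0, Rabs_R0. apply cond_pos.
Qed.

Lemma lim_seq_p_flux (u v : nat -> R) (c b : R) : is_lim_seq u 0 -> is_lim_seq v b -> b <> 0 ->
  is_lim_seq (fun n => - (1 + u n ^ 2) / (2 * v n ^ 2) + c) (- / (2 * b ^ 2) + c).
Proof.
  intros Hu Hv Hb.
  replace (- / (2 * b ^ 2) + c) with ((-1 + (-1) * (0 * 0)) / (2 * (b * b)) + c) by (field; auto).
  apply is_lim_seq_plus'; [|apply is_lim_seq_const].
  apply (is_lim_seq_ext (fun n => (-1 + (-1) * (u n * u n)) / (2 * (v n * v n)))).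
  { intros n. unfold Rdiv. f_equal; [ring | f_equal; ring]. }
  apply is_lim_seq_div'.
  - apply is_lim_seq_plus'; [apply is_lim_seq_const|].
    apply is_lim_seq_mult'; [apply is_lim_seq_const | apply is_lim_seq_mult'; auto].
  - apply is_lim_seq_mult'; [apply is_lim_seq_const | apply is_lim_seq_mult'; auto].
  - intros E. apply Hb. nra.
Qed.

Section HeightLimit.

Variables (g gq gp gqq gpp gpq : R -> R -> R) (M : R) (K : R -> R).
Variables (rho rho1 H H1 : R -> R) (F delta : R).
Hypothesis HB : bounded_C2 g gq gp gqq gpp M.
Hypothesis HK : forall p, Icl p -> cvg_pinfty (fun t => g t p) (K p).
Hypothesis HE : height_flow g gq gp gqq gpq rho rho1 H H1 F delta.
Hypothesis Crho1 : continuous_I rho1.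
Hypothesis CH : continuous_I H.
Hypothesis CH1 : continuous_I H1.
Hypothesis HH1 : forall p, Icl p -> 0 < H1 p.
Hypothesis HF : 0 < F.

Definition p_flux (t p : R) : R := - (1 + (gq t p)^2) / (2 * (gp t p)^2) + / (2 * (H1 p)^2).

Definition q_flux_dq (t p : R) : R := (gqq t p * gp t p - gq t p * gpq t p) / gp t p ^ 2.

Lemma gp_pos t p : -1 < p < 0 -> 0 < gp t p.
Proof. intros Hp. generalize (hf_gp_ge HE t Hp) (hf_delta_pos HE). lra. Qed.

Lemma q_flux_derive t p : -1 < p < 0 -> is_derive (fun u => gq u p / gp u p) t (q_flux_dq t p).
Proof.
  intros Hp. apply (is_derive_div (fun u => gq u p) (fun u => gp u p)).
  - apply (bC2_dqq HB). unfold Icl; lra.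
  - apply (hf_dpq HE). unfold Icl; lra.
  - generalize (gp_pos t p Hp). lra.
Qed.

Lemma q_flux_continuity t p : -1 < p < 0 -> continuity_2d_pt (fun u v => gq u v / gp u v) t p.
Proof.
  intros Hp. apply continuity_2d_pt_mult; [apply (hf_cont_q HE); auto|].
  apply continuity_2d_pt_inv; [apply (hf_cont_p HE); auto|].
  generalize (gp_pos t p Hp). lra.
Qed.

Lemma q_flux_dq_continuity t p : -1 < p < 0 -> continuity_2d_pt q_flux_dq t p.
Proof.
  intros Hp.
  apply continuity_2d_pt_ext
    with (fun u v => (gqq u v * gp u v - gq u v * gpq u v) * / (gp u v * gp u v)).
  { intros u v. unfold q_flux_dq, Rdiv. simpl. rewrite Rmult_1_r. reflexivity. }
  assert (Cq := hf_cont_q HE t Hp). assert (Cp := hf_cont_p HE t Hp).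
  assert (Cqq := hf_cont_qq HE t Hp). assert (Cpq := hf_cont_pq HE t Hp).
  apply continuity_2d_pt_mult.
  - apply continuity_2d_pt_minus; apply continuity_2d_pt_mult; auto.
  - apply continuity_2d_pt_inv; [apply continuity_2d_pt_mult; auto|].
    generalize (gp_pos t p Hp). nra.
Qed.

Lemma p_flux_derive t p : -1 < p < 0 ->
  is_derive (p_flux t) p (source rho1 H F (g t) p - q_flux_dq t p).
Proof.
  intros Hp. destruct (hf_interior HE t Hp) as [A [B [HA [HBd HAB]]]].
  assert (EB : B = q_flux_dq t p).
  { rewrite <- (is_derive_unique _ _ _ HBd). apply is_derive_unique, q_flux_derive; auto. }
  unfold source. replace (/ F^2 * rho1 p * (g t p - H p) - q_flux_dq t p) with A by lra.
  exact HA.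
Qed.

Lemma p_flux_lim_seq (xi : nat -> R) p : Icl p -> (forall n, INR n <= xi n) ->
  is_lim_seq (fun n => p_flux (xi n) p) (- phi_dev (slope_limit gp) H1 p).
Proof.
  intros Hp Hxi. unfold p_flux, phi_dev.
  replace (- (/ (2 * slope_limit gp p ^ 2) - / (2 * H1 p ^ 2)))
    with (- / (2 * slope_limit gp p ^ 2) + / (2 * H1 p ^ 2)) by ring.
  apply lim_seq_p_flux.
  - apply (cvg_pinfty_seq (fun t => gq t p)); auto.
    intros eps He. destruct (gq_ucvg0 g gq gp gqq gpp M K HB HK eps He) as [T HT].
    exists T. intros t Ht. apply HT; auto.
  - apply (cvg_pinfty_seq (fun t => gp t p)); auto. apply (gp_cvg g gq gp gqq gpp M K HB HK p Hp).
  - assert (Hge := slope_limit_ge g gq gp gqq gpp M K HB HK delta (hf_gp_ge HE) p Hp).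
    generalize (hf_delta_pos HE). lra.
Qed.

Section Strip.

Variables p0 p1 : R.
Hypothesis Hp0 : -1 < p0.
Hypothesis Hp01 : p0 < p1.
Hypothesis Hp1 : p1 < 0.

Let between_interior z : Rmin p0 p1 <= z <= Rmax p0 p1 -> -1 < z < 0.
Proof. rewrite Rmin_left, Rmax_right by lra. lra. Qed.

Lemma ex_RInt_q_flux t : ex_RInt (fun p => gq t p / gp t p) p0 p1.
Proof.
  apply (ex_RInt_continuous (V:=R_CompleteNormedModule)). intros z Hz.
  apply continuity_pt_filterlim, (continuity_2d_pt_snd (fun u v => gq u v / gp u v)).
  apply q_flux_continuity; auto.
Qed.

Lemma ex_RInt_q_flux_dq t : ex_RInt (q_flux_dq t) p0 p1.
Proof.
  apply (ex_RInt_continuous (V:=R_CompleteNormedModule)). intros z Hz.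
  apply continuity_pt_filterlim, (continuity_2d_pt_snd q_flux_dq).
  apply q_flux_dq_continuity; auto.
Qed.

Lemma RInt_q_flux_derive t :
  is_derive (fun t => RInt (fun p => gq t p / gp t p) p0 p1) t (RInt (q_flux_dq t) p0 p1).
Proof.
  assert (Hd := is_derive_RInt_param (fun u p => gq u p / gp u p) p0 p1 t).
  erewrite (RInt_ext _ (q_flux_dq t)) in Hd; [apply Hd|].
  - apply filter_forall. intros x0 t0 Ht0. eexists. apply q_flux_derive, between_interior, Ht0.
  - intros t0 Ht0. specialize (between_interior t0 Ht0) as Hin.
    apply continuity_2d_pt_ext_loc with q_flux_dq; [|apply q_flux_dq_continuity; auto].
    assert (Hdl : 0 < Rmin (t0 + 1) (- t0)) by (apply Rmin_pos; lra).
    exists (mkposreal _ Hdl). intros u v _ Hv. simpl in Hv.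
    apply Rabs_def2 in Hv. unfold Rmin in Hv.
    symmetry; apply is_derive_unique, q_flux_derive. destruct (Rle_dec _ _) in Hv; lra.
  - apply filter_forall. intros y. apply ex_RInt_q_flux.
  - intros x Hx. apply is_derive_unique, q_flux_derive, between_interior. lra.
Qed.

Lemma p_flux_increment t :
  p_flux t p1 - p_flux t p0 = RInt (source rho1 H F (g t)) p0 p1 - RInt (q_flux_dq t) p0 p1.
Proof.
  assert (Cs : continuous_I (source rho1 H F (g t)))
    by (apply continuous_I_source; auto; apply (continuous_I_g g gq gp gqq gpp M HB)).
  assert (Ex1 : ex_RInt (source rho1 H F (g t)) p0 p1) by (apply ex_RInt_I; auto; lra).
  transitivity (RInt (fun p => source rho1 H F (g t) p - q_flux_dq t p) p0 p1).
  - symmetry. apply is_RInt_unique, (is_RInt_derive (p_flux t)).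
    + intros x Hx. apply p_flux_derive, between_interior. lra.
    + intros x Hx. assert (Hx' := between_interior x Hx).
      apply continuity_pt_filterlim, continuity_pt_minus.
      * apply continuous_I_interior; auto.
      * apply (continuity_2d_pt_snd q_flux_dq), q_flux_dq_continuity; auto.
  - exact (RInt_minus (V:=R_CompleteNormedModule) _ _ p0 p1 Ex1 (ex_RInt_q_flux_dq t)).
Qed.

Lemma RInt_q_flux_cvg0 : cvg_pinfty (fun t => RInt (fun p => gq t p / gp t p) p0 p1) 0.
Proof.
  intros eps He. assert (Hd := hf_delta_pos HE).
  destruct (gq_ucvg0 g gq gp gqq gpp M K HB HK (eps * delta / 2)) as [T HT].
  { assert (0 < eps * delta) by (apply Rmult_lt_0_compat; lra). lra. }
  exists T. intros t Ht. rewrite Rminus_0_r.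
  eapply Rle_lt_trans;
    [apply (abs_RInt_le_const _ p0 p1 (eps / 2)); [lra | apply ex_RInt_q_flux |] | nra].
  intros z Hz. assert (Hz' : -1 < z < 0) by lra.
  specialize (HT t Ht z ltac:(unfold Icl; lra)). rewrite Rminus_0_r in HT.
  assert (Hgp := hf_gp_ge HE t Hz').
  unfold Rdiv. rewrite Rabs_mult, Rabs_inv, (Rabs_right (gp t z)) by lra.
  apply Rmult_le_reg_r with (gp t z); [lra|].
  rewrite Rmult_assoc, Rinv_l, Rmult_1_r by lra.
  assert (eps / 2 * delta <= eps / 2 * gp t z) by (apply Rmult_le_compat_l; lra). lra.
Qed.

Lemma RInt_source_cvg :
  cvg_pinfty (fun t => RInt (source rho1 H F (g t)) p0 p1) (RInt (source rho1 H F K) p0 p1).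
Proof.
  intros eps He.
  destruct (bounded_continuous_I rho1 Crho1) as [Br HBr].
  assert (HBr0 : 0 <= Br)
    by (eapply Rle_trans; [apply Rabs_pos | apply (HBr (-1)); unfold Icl; lra]).
  assert (HF2 : 0 < / F^2) by (apply Rinv_0_lt_compat; nra).
  set (C := / F^2 * Br).
  assert (HC : 0 <= C) by (unfold C; apply Rmult_le_pos; lra).
  destruct (g_ucvg g gq gp gqq gpp M K HB HK (eps / (2 * (C + 1)))) as [T HT].
  { apply Rdiv_lt_0_compat; lra. }
  assert (CK := continuous_I_K g gq gp gqq gpp M K HB HK).
  assert (Hex : forall f, continuous_I f -> ex_RInt (source rho1 H F f) p0 p1).
  { intros f Cf. apply ex_RInt_I; try lra. apply continuous_I_source; auto. }
  exists T. intros t Ht.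
  assert (Cg := continuous_I_g g gq gp gqq gpp M HB t).
  assert (Cd : continuous_I (fun p => / F^2 * rho1 p * (g t p - K p))).
  { continuous_I_tac. }
  replace (RInt (source rho1 H F (g t)) p0 p1 - RInt (source rho1 H F K) p0 p1)
    with (RInt (fun p => / F^2 * rho1 p * (g t p - K p)) p0 p1).
  2: { etransitivity;
         [|exact (RInt_minus (V:=R_CompleteNormedModule) _ _ p0 p1 (Hex _ Cg) (Hex _ CK))].
       apply RInt_ext. intros x _. unfold source, minus, plus, opp; simpl. ring. }
  eapply Rle_lt_trans.
  { apply (abs_RInt_le_const _ p0 p1 (C * (eps / (2 * (C + 1)))));
      [lra | apply ex_RInt_I; auto; lra|].
    intros z Hz. assert (Hz' : Icl z) by (unfold Icl; lra).
    rewrite !Rabs_mult, (Rabs_right (/ F^2)) by lra. unfold C. rewrite !Rmult_assoc.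
    apply Rmult_le_compat_l; [lra|].
    apply Rmult_le_compat; auto using Rabs_pos. left. apply HT; auto. }
  assert (C * (eps / (2 * (C + 1))) <= eps / 2).
  { apply Rmult_le_reg_r with (2 * (C + 1)); [lra|].
    replace (C * (eps / (2 * (C + 1))) * (2 * (C + 1))) with (C * eps) by (field; lra). nra. }
  assert (0 <= C * (eps / (2 * (C + 1))))
    by (apply Rmult_le_pos; auto; left; apply Rdiv_lt_0_compat; lra).
  nra.
Qed.

(* Along times [xi n] where the mean value theorem makes the [q]-derivative of
   [RInt (gq/gp)] vanish in the limit, the integrated height equation becomes an
   identity between the limits of [p_flux] at [p1] and [p0]. *)
Lemma phi_dev_increment :
  phi_dev (slope_limit gp) H1 p0 - phi_dev (slope_limit gp) H1 p1 = RInt (source rho1 H F K) p0 p1.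
Proof.
  set (W := fun t => RInt (fun p => gq t p / gp t p) p0 p1).
  set (G := fun t => RInt (q_flux_dq t) p0 p1).
  assert (Hmvt : forall n : nat, exists c, INR n <= c /\ W (INR n + 1) - W (INR n) = G c).
  { intros n. destruct (MVT_gen W (INR n) (INR n + 1) G) as [c [Hc Heq]].
    - intros x _. apply RInt_q_flux_derive.
    - intros x _. apply continuity_pt_filterlim, (ex_derive_continuous (V:=R_NormedModule)).
      eexists; apply RInt_q_flux_derive.
    - rewrite Rmin_left in Hc by lra. exists c. split; [lra|]. rewrite Heq. ring. }
  destruct (choice (fun (n : nat) c => INR n <= c /\ W (INR n + 1) - W (INR n) = G c) Hmvt)
    as [xi Hxi].
  assert (LG : is_lim_seq (fun n => G (xi n)) 0).
  { apply (is_lim_seq_ext (fun n => W (INR n + 1) - W (INR n))); [intros n; apply Hxi|].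
    replace 0 with (0 - 0) by ring.
    apply is_lim_seq_minus'; apply (cvg_pinfty_seq W 0); try apply RInt_q_flux_cvg0;
      intros n; lra. }
  assert (LI : is_lim_seq (fun n => RInt (source rho1 H F (g (xi n))) p0 p1)
                 (RInt (source rho1 H F K) p0 p1)).
  { apply (cvg_pinfty_seq (fun t => RInt (source rho1 H F (g t)) p0 p1)).
    - apply RInt_source_cvg.
    - intros n; apply Hxi. }
  assert (Hxi' : forall n, INR n <= xi n) by (intros n; apply Hxi).
  assert (L1 : is_lim_seq (fun n => p_flux (xi n) p1 - p_flux (xi n) p0)
     (- phi_dev (slope_limit gp) H1 p1 - - phi_dev (slope_limit gp) H1 p0)).
  { apply is_lim_seq_minus'; apply p_flux_lim_seq; auto; unfold Icl; lra. }
  assert (L2 : is_lim_seq (fun n => p_flux (xi n) p1 - p_flux (xi n) p0)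
     (RInt (source rho1 H F K) p0 p1 - 0)).
  { apply (is_lim_seq_ext (fun n => RInt (source rho1 H F (g (xi n))) p0 p1 - G (xi n))).
    - intros n. symmetry. apply p_flux_increment.
    - apply is_lim_seq_minus'; auto. }
  apply is_lim_seq_unique in L1. apply is_lim_seq_unique in L2.
  rewrite L1 in L2. injection L2. lra.
Qed.

End Strip.

Lemma phi_dev_top : phi_dev (slope_limit gp) H1 0 = - (/ F^2 * rho 0 * (K 0 - 1)).
Proof.
  assert (HI0 : Icl 0) by (unfold Icl; lra).
  assert (L : is_lim_seq (fun n => - p_flux (INR n) 0 + / F^2 * rho 0 * (g (INR n) 0 - 1))
     (- - phi_dev (slope_limit gp) H1 0 + / F^2 * rho 0 * (K 0 - 1))).
  { apply is_lim_seq_plus'.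
    - apply (proj1 (is_lim_seq_opp _ (- phi_dev (slope_limit gp) H1 0))).
      apply p_flux_lim_seq; auto. intros n; lra.
    - apply is_lim_seq_mult'; [apply is_lim_seq_const|].
      apply is_lim_seq_minus'; [|apply is_lim_seq_const].
      apply (cvg_pinfty_seq (fun t => g t 0)); [apply HK; auto | intros n; lra]. }
  apply (is_lim_seq_ext _ (fun _ => 0)) in L.
  2: { intros n. etransitivity; [|apply (hf_top HE (INR n))]. unfold p_flux, Rdiv. ring. }
  apply is_lim_seq_unique in L. rewrite Lim_seq_const in L. injection L as E. simpl. lra.
Qed.

Lemma phi_dev_eq p0 : -1 < p0 < 0 ->
  phi_dev (slope_limit gp) H1 p0 = phi_dev (slope_limit gp) H1 0 + RInt (source rho1 H F K) p0 0.
Proof.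
  intros Hp0.
  set (a := slope_limit gp).
  assert (Ca : continuous_I a) by exact (continuous_I_slope_limit g gq gp gqq gpp M K HB HK).
  assert (CK := continuous_I_K g gq gp gqq gpp M K HB HK).
  assert (Cphi : continuous_I (phi_dev a H1)).
  { apply continuous_I_minus; apply continuous_I_inv_2sq; auto.
    - intros x Hx. generalize (slope_limit_ge g gq gp gqq gpp M K HB HK delta (hf_gp_ge HE) x Hx),
        (hf_delta_pos HE). fold a. lra.
    - intros x Hx. generalize (HH1 x Hx). lra. }
  set (f := source rho1 H F K).
  assert (Cf : continuous_I f) by (apply continuous_I_source; auto).
  set (D := fun x => phi_dev a H1 p0 - phi_dev a H1 (clamp x) - RInt (fun y => f (clamp y)) p0 x).
  assert (HD : D 0 = 0).
  { apply (continuity_pt_zero_left D p0 0); [| lra |].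
    - unfold D. apply continuity_pt_minus; [apply continuity_pt_minus|].
      + apply continuity_pt_const. intros u v; reflexivity.
      + apply Cphi.
      + apply continuity_RInt_clamp; auto.
    - intros x Hx. unfold D. rewrite clamp_id by (unfold Icl; lra).
      rewrite RInt_clamp_eq by lra.
      assert (E := phi_dev_increment p0 x ltac:(lra) ltac:(lra) ltac:(lra)). fold a f in E. lra. }
  unfold D in HD. rewrite clamp_id in HD by (unfold Icl; lra).
  rewrite RInt_clamp_eq in HD by lra. lra.
Qed.

End HeightLimit.

(** * The flow force comparison *)

Definition Rprim (rho H1 : R -> R) (p : R) : R := RInt (fun t => rho t * H1 t) 0 p.

Definition flow_force_density (rho H H1 : R -> R) (F : R) (L L1 : R -> R) (p : R) : R :=
  (/ (2 * L1 p ^ 2) + / (2 * H1 p ^ 2) - / F^2 * rho p * (L p - H p) - / F^2 * Rprim rho H1 p)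
  * L1 p.

Lemma flow_force_RInt rho H H1 F (L L1 : R -> R) :
  (forall x, -1 < x < 0 -> is_derive L x (L1 x)) ->
  flow_force rho H H1 F L = RInt (flow_force_density rho H H1 F L L1) (-1) 0.
Proof.
  intros HL. unfold flow_force. apply RInt_ext. intros x Hx.
  rewrite Rmin_left, Rmax_right in Hx by lra.
  rewrite (is_derive_unique L x (L1 x)) by auto. reflexivity.
Qed.

Lemma Rprim_clamp rho H1 p : Icl p ->
  Rprim rho H1 p = RInt (fun t => (fun s => rho s * H1 s) (clamp t)) 0 p.
Proof.
  intros Hp. unfold Rprim. apply RInt_ext. intros x Hx.
  unfold Icl in Hp. revert Hx; unfold Rmin, Rmax; destruct (Rle_dec 0 p); intros;
  rewrite clamp_id; auto; unfold Icl; lra.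
Qed.

Lemma continuous_I_Rprim rho H1 :
  continuous_I rho -> continuous_I H1 -> continuous_I (Rprim rho H1).
Proof.
  intros C1 C2.
  apply continuous_I_ext with (fun p => RInt (fun t => (fun s => rho s * H1 s) (clamp t)) 0 p).
  { intros x Hx. symmetry. apply Rprim_clamp; auto. }
  apply continuous_I_of_continuous. intros x.
  apply (continuity_RInt_clamp (fun s => rho s * H1 s)), continuous_I_mult; auto.
Qed.

Lemma Rprim_derive rho H1 x : continuous_I rho -> continuous_I H1 -> -1 < x < 0 ->
  is_derive (Rprim rho H1) x (rho x * H1 x).
Proof.
  intros C1 C2 Hx.
  apply is_derive_ext_loc with (fun p => RInt (fun t => (fun s => rho s * H1 s) (clamp t)) 0 p).
  { apply (filter_imp Icl); [|exact (locally_Icl x Hx)].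
    intros y Hy. symmetry. apply Rprim_clamp; auto. }
  replace (rho x * H1 x) with ((fun s => rho s * H1 s) (clamp x))
    by (rewrite clamp_id; auto; unfold Icl; lra).
  apply (is_derive_RInt_clamp (fun s => rho s * H1 s)), continuous_I_mult; auto.
Qed.

Lemma Rprim_0 rho H1 : Rprim rho H1 0 = 0.
Proof. apply (RInt_point (V:=R_CompleteNormedModule)). Qed.

Lemma inv_2sq_le a b : 0 < a -> 0 < b -> / (2 * a ^ 2) <= / (2 * b ^ 2) -> b <= a.
Proof.
  intros Ha Hb H. destruct (Rle_dec b a) as [|Hn]; auto. exfalso.
  assert (/ (2 * b ^ 2) < / (2 * a ^ 2)); [|lra].
  apply Rinv_lt_contravar; [|simpl; nra].
  assert (0 < a ^ 2) by (apply pow_lt; auto). assert (0 < b ^ 2) by (apply pow_lt; auto). nra.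
Qed.

Section FlowForce.

Variables (K a H H1 rho rho1 : R -> R) (F : R).
Hypothesis HF : 0 < F.
Hypothesis CK : continuous_I K.
Hypothesis Ca : continuous_I a.
Hypothesis Ha : forall x, Icl x -> 0 < a x.
Hypothesis HKd : forall x, -1 < x < 0 -> is_derive K x (a x).
Hypothesis HK1 : K (-1) = 0.
Hypothesis CH : continuous_I H.
Hypothesis CH1 : continuous_I H1.
Hypothesis HH1 : forall x, Icl x -> 0 < H1 x.
Hypothesis HHd : forall x, -1 < x < 0 -> is_derive H x (H1 x).
Hypothesis HHm1 : H (-1) = 0.
Hypothesis HH0 : H 0 = 1.
Hypothesis Crho : continuous_I rho.
Hypothesis Hrho0 : 0 < rho 0.
Hypothesis Hrhod : forall x, -1 < x < 0 -> is_derive rho x (rho1 x).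
Hypothesis Crho1 : continuous_I rho1.
Hypothesis Hrho1 : forall x, Icl x -> rho1 x <= 0.
Hypothesis Htop : phi_dev a H1 0 = - (/ F^2 * rho 0 * (K 0 - 1)).
Hypothesis Hphi :
  forall p, -1 < p < 0 -> phi_dev a H1 p = phi_dev a H1 0 + RInt (source rho1 H F K) p 0.

Let a_neq0 x : Icl x -> a x <> 0.
Proof. intros Hx. generalize (Ha x Hx). lra. Qed.

Let H1_neq0 x : Icl x -> H1 x <> 0.
Proof. intros Hx. generalize (HH1 x Hx). lra. Qed.

Definition cube_term (p : R) : R := (a p - H1 p) ^ 3 / (4 * a p ^ 2 * H1 p ^ 2).

Lemma continuous_I_phi_dev : continuous_I (phi_dev a H1).
Proof. apply continuous_I_minus; apply continuous_I_inv_2sq; auto. Qed.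

Lemma continuous_I_source_K : continuous_I (source rho1 H F K).
Proof. apply continuous_I_source; auto. Qed.

Lemma phi_dev_derive x : -1 < x < 0 -> is_derive (phi_dev a H1) x (- source rho1 H F K x).
Proof.
  intros Hx. set (f := source rho1 H F K).
  apply is_derive_ext_loc with (fun p => phi_dev a H1 0 + RInt (fun t => f (clamp t)) p 0).
  { assert (Hd : 0 < Rmin (x + 1) (- x)) by (apply Rmin_pos; lra).
    exists (mkposreal _ Hd). intros y Hy.
    assert (Hy' : Rabs (y - x) < Rmin (x + 1) (- x)) by exact Hy.
    apply Rabs_def2 in Hy'. unfold Rmin in Hy'.
    assert (Hy1 : -1 < y < 0) by (destruct (Rle_dec _ _) in Hy'; lra).
    rewrite (Hphi y Hy1), RInt_clamp_eq by lra. reflexivity. }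
  replace (- f x) with (0 + opp (f (clamp x)))
    by (rewrite clamp_id by (unfold Icl; lra); unfold opp; simpl; ring).
  apply (is_derive_plus (V:=R_NormedModule)); [apply is_derive_Reals, derivable_pt_lim_const|].
  apply (is_derive_RInt' (fun t => f (clamp t)) (fun p => RInt (fun t => f (clamp t)) p 0) x 0).
  - apply filter_forall. intros z. apply (RInt_correct (V:=R_CompleteNormedModule)).
    apply (ex_RInt_continuous (V:=R_CompleteNormedModule)). intros u _.
    apply continuity_pt_filterlim, continuous_I_source_K.
  - apply continuity_pt_filterlim, continuous_I_source_K.
Qed.

Definition gap (p : R) : R := K p - H p.

(* The terms of [S(K) - S(H)] besides [cube_term] form the derivative of [exact_term]
   once [phi_dev' = - source] is used; [exact_term] vanishes at [-1] since [K = H = 0] there,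
   and at [0] by the limiting top condition. *)
Definition exact_term (p : R) : R :=
  - / F^2 * (Rprim rho H1 p * gap p) - / (2 * F^2) * (rho p * (gap p * gap p))
  - / 2 * (phi_dev a H1 p * gap p).

Definition exact_term_d (p : R) : R :=
  - / F^2 * (rho p * H1 p * gap p + Rprim rho H1 p * (a p - H1 p))
  - / (2 * F^2) * (rho1 p * (gap p * gap p)
                   + rho p * ((a p - H1 p) * gap p + gap p * (a p - H1 p)))
  - / 2 * ((- source rho1 H F K p) * gap p + phi_dev a H1 p * (a p - H1 p)).

Lemma continuous_I_gap : continuous_I gap.
Proof. apply continuous_I_minus; auto. Qed.

Lemma exact_term_derive x : -1 < x < 0 -> is_derive exact_term x (exact_term_d x).
Proof.
  intros Hx.
  assert (Hw : is_derive gap x (a x - H1 x)) by (apply (is_derive_minus (V:=R_NormedModule)); auto).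
  assert (HR := Rprim_derive rho H1 x Crho CH1 Hx).
  assert (Hphi' := phi_dev_derive x Hx).
  assert (Hr := Hrhod x Hx).
  unfold exact_term, exact_term_d.
  apply (is_derive_minus (V:=R_NormedModule)
    (fun p => - / F^2 * (Rprim rho H1 p * gap p) - / (2 * F^2) * (rho p * (gap p * gap p)))
    (fun p => / 2 * (phi_dev a H1 p * gap p))).
  apply (is_derive_minus (V:=R_NormedModule) (fun p => - / F^2 * (Rprim rho H1 p * gap p))
    (fun p => / (2 * F^2) * (rho p * (gap p * gap p)))).
  - apply (is_derive_scal (fun p => Rprim rho H1 p * gap p)), is_derive_Rmult; auto.
  - apply (is_derive_scal (fun p => rho p * (gap p * gap p))).
    apply (is_derive_Rmult rho (fun p => gap p * gap p)), is_derive_Rmult; auto.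
  - apply (is_derive_scal (fun p => phi_dev a H1 p * gap p)), is_derive_Rmult; auto.
Qed.

Lemma continuous_I_exact_term : continuous_I exact_term.
Proof.
  assert (CR := continuous_I_Rprim rho H1 Crho CH1).
  assert (Cw := continuous_I_gap). assert (Cphi := continuous_I_phi_dev).
  unfold exact_term.
  continuous_I_tac.
Qed.

Lemma continuous_I_exact_term_d : continuous_I exact_term_d.
Proof.
  assert (CR := continuous_I_Rprim rho H1 Crho CH1).
  assert (Cw := continuous_I_gap). assert (Cphi := continuous_I_phi_dev).
  assert (Cs := continuous_I_source_K).
  unfold exact_term_d.
  continuous_I_tac.
Qed.

Lemma RInt_exact_term_d : RInt exact_term_d (-1) 0 = 0.
Proof.
  rewrite (RInt_derive_I exact_term exact_term_d continuous_I_exact_term continuous_I_exact_term_d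
             exact_term_derive).
  change (exact_term 0 - exact_term (-1) = 0). unfold exact_term, gap.
  rewrite Rprim_0, Htop, HK1, HHm1, HH0. field. apply Rgt_not_eq; lra.
Qed.

Lemma flow_force_density_diff p : Icl p ->
  flow_force_density rho H H1 F K a p - flow_force_density rho H H1 F H H1 p
  = cube_term p + exact_term_d p.
Proof.
  intros Hp. generalize (a_neq0 p Hp) (H1_neq0 p Hp); intros.
  unfold flow_force_density, cube_term, exact_term_d, phi_dev, source, gap.
  field. repeat split; auto; apply Rgt_not_eq; lra.
Qed.

Lemma continuous_I_cube_term : continuous_I cube_term.
Proof.
  unfold cube_term. apply continuous_I_mult.
  - apply continuous_I_pow, continuous_I_minus; auto.
  - apply continuous_I_inv.
    + repeat first [apply continuous_I_mult | apply continuous_I_pow | apply continuous_I_const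
                   | assumption].
    + intros x Hx. apply Rgt_not_eq, Rmult_lt_0_compat; [apply Rmult_lt_0_compat; [lra|]|];
      apply pow_lt; auto.
Qed.

Lemma ex_RInt_I_full f : continuous_I f -> ex_RInt f (-1) 0.
Proof. intros Cf. apply ex_RInt_I; auto; lra. Qed.

Lemma flow_force_diff :
  flow_force rho H H1 F K - flow_force rho H H1 F H = RInt cube_term (-1) 0.
Proof.
  assert (CR := continuous_I_Rprim rho H1 Crho CH1).
  assert (CdK : continuous_I (flow_force_density rho H H1 F K a)).
  { unfold flow_force_density.
    continuous_I_tac. }
  assert (CdH : continuous_I (flow_force_density rho H H1 F H H1)).
  { unfold flow_force_density.
    continuous_I_tac. }
  rewrite (flow_force_RInt rho H H1 F K a HKd), (flow_force_RInt rho H H1 F H H1 HHd).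
  etransitivity; [symmetry; exact (RInt_minus (V:=R_CompleteNormedModule) _ _ (-1) 0
                                     (ex_RInt_I_full _ CdK) (ex_RInt_I_full _ CdH))|].
  transitivity (RInt (fun p => cube_term p + exact_term_d p) (-1) 0).
  - apply RInt_ext. intros x Hx. rewrite Rmin_left, Rmax_right in Hx by lra.
    apply flow_force_density_diff. unfold Icl; lra.
  - etransitivity; [exact (RInt_plus (V:=R_CompleteNormedModule) _ _ (-1) 0
                     (ex_RInt_I_full _ continuous_I_cube_term)
                     (ex_RInt_I_full _ continuous_I_exact_term_d))|].
    change (RInt cube_term (-1) 0 + RInt exact_term_d (-1) 0 = RInt cube_term (-1) 0).
    rewrite RInt_exact_term_d. ring.
Qed.

Lemma source_K_sign_ge : (forall p, Icl p -> H p <= K p) ->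
  forall x, Icl x -> source rho1 H F K x <= 0.
Proof.
  intros Hge x Hx. unfold source.
  assert (0 < / F^2) by (apply Rinv_0_lt_compat; nra).
  generalize (Hge x Hx) (Hrho1 x Hx). intros. assert (/ F^2 * rho1 x <= 0) by nra. nra.
Qed.

Lemma source_K_sign_le : (forall p, Icl p -> K p <= H p) ->
  forall x, Icl x -> 0 <= source rho1 H F K x.
Proof.
  intros Hle x Hx. unfold source.
  assert (0 < / F^2) by (apply Rinv_0_lt_compat; nra).
  generalize (Hle x Hx) (Hrho1 x Hx). intros. assert (/ F^2 * rho1 x <= 0) by nra. nra.
Qed.

Lemma phi_dev_nonpos : (forall p, Icl p -> H p <= K p) ->
  forall x, -1 < x < 0 -> phi_dev a H1 x <= 0.
Proof.
  intros Hge x Hx. rewrite Hphi by auto.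
  assert (Htop0 : phi_dev a H1 0 <= 0).
  { rewrite Htop. generalize (Hge 0 ltac:(unfold Icl; lra)). intros.
    assert (0 < / F^2) by (apply Rinv_0_lt_compat; nra).
    assert (0 <= / F^2 * rho 0 * (K 0 - 1)) by (apply Rmult_le_pos; nra). lra. }
  assert (RInt (source rho1 H F K) x 0 <= 0); [|lra].
  apply RInt_le_0; [lra | apply ex_RInt_I; auto using continuous_I_source_K; lra|].
  intros z Hz. apply source_K_sign_ge; auto. unfold Icl; lra.
Qed.

Lemma phi_dev_nonneg : (forall p, Icl p -> K p <= H p) ->
  forall x, -1 < x < 0 -> 0 <= phi_dev a H1 x.
Proof.
  intros Hle x Hx. rewrite Hphi by auto.
  assert (Htop0 : 0 <= phi_dev a H1 0).
  { rewrite Htop. generalize (Hle 0 ltac:(unfold Icl; lra)). intros.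
    assert (0 < / F^2) by (apply Rinv_0_lt_compat; nra).
    assert (/ F^2 * rho 0 * (K 0 - 1) <= 0) by (assert (0 <= / F^2 * rho 0) by nra; nra). lra. }
  assert (0 <= RInt (source rho1 H F K) x 0); [|lra].
  apply RInt_ge_0; [lra | apply ex_RInt_I; auto using continuous_I_source_K; lra|].
  intros z Hz. apply source_K_sign_le; auto. unfold Icl; lra.
Qed.

Lemma cube_term_denom_pos x : Icl x -> 0 < 4 * a x ^ 2 * H1 x ^ 2.
Proof.
  intros Hx. apply Rmult_lt_0_compat; [apply Rmult_lt_0_compat; [lra|]|]; apply pow_lt; auto.
Qed.

Lemma cube_term_nonneg : (forall p, Icl p -> H p <= K p) ->
  forall x, -1 < x < 0 -> 0 <= cube_term x.
Proof.
  intros Hge x Hx. assert (Hx' : Icl x) by (unfold Icl; lra).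
  assert (H1 x <= a x).
  { apply inv_2sq_le; auto. generalize (phi_dev_nonpos Hge x Hx). unfold phi_dev. lra. }
  unfold cube_term, Rdiv. apply Rmult_le_pos; [apply pow_le; lra|].
  left. apply Rinv_0_lt_compat, cube_term_denom_pos; auto.
Qed.

Lemma cube_term_nonpos : (forall p, Icl p -> K p <= H p) ->
  forall x, -1 < x < 0 -> cube_term x <= 0.
Proof.
  intros Hle x Hx. assert (Hx' : Icl x) by (unfold Icl; lra).
  assert (a x <= H1 x).
  { apply inv_2sq_le; auto. generalize (phi_dev_nonneg Hle x Hx). unfold phi_dev. lra. }
  assert (0 <= (H1 x - a x) ^ 3 * / (4 * a x ^ 2 * H1 x ^ 2)).
  { apply Rmult_le_pos; [apply pow_le; lra|].
    left. apply Rinv_0_lt_compat, cube_term_denom_pos; auto. }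
  unfold cube_term, Rdiv. replace ((a x - H1 x) ^ 3) with (- (H1 x - a x) ^ 3) by ring.
  rewrite Ropp_mult_distr_l_reverse. lra.
Qed.

Lemma cube_term_eq0 x : Icl x -> cube_term x = 0 -> a x = H1 x.
Proof.
  intros Hx Hc. destruct (Req_dec (a x - H1 x) 0) as [|E]; [lra|]. exfalso.
  unfold cube_term, Rdiv in Hc. apply Rmult_integral in Hc. destruct Hc as [Hc|Hc].
  - exact (pow_nonzero _ 3 E Hc).
  - generalize (cube_term_denom_pos x Hx). intros Hd.
    apply (Rinv_neq_0_compat _ (Rgt_not_eq _ _ Hd) Hc).
Qed.

Lemma flow_force_eq_slope :
  flow_force rho H H1 F K = flow_force rho H H1 F H ->
  ((forall p, Icl p -> H p <= K p) \/ (forall p, Icl p -> K p <= H p)) ->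
  forall x, Icl x -> a x = H1 x.
Proof.
  intros Hff Hord x Hx. apply cube_term_eq0; auto.
  assert (Hc0 : @eq R (RInt cube_term (-1) 0) 0) by (rewrite <- flow_force_diff, Hff; ring).
  destruct Hord as [Hge|Hle].
  - apply RInt_eq0_nonneg_I; auto using continuous_I_cube_term, cube_term_nonneg.
  - rewrite <- (Ropp_involutive (cube_term x)).
    rewrite (RInt_eq0_nonneg_I (fun p => - cube_term p)); auto; [ring| | |].
    + apply continuous_I_opp, continuous_I_cube_term.
    + intros y Hy. generalize (cube_term_nonpos Hle y Hy). lra.
    + etransitivity; [exact (RInt_opp (V:=R_CompleteNormedModule) cube_term (-1) 0
                               (ex_RInt_I_full _ continuous_I_cube_term))|].
      change (- RInt cube_term (-1) 0 = 0). rewrite Hc0. ring.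
Qed.

Lemma flow_force_eq_ordered :
  flow_force rho H H1 F K = flow_force rho H H1 F H ->
  ((forall p, Icl p -> H p <= K p) \/ (forall p, Icl p -> K p <= H p)) ->
  forall p, Icl p -> K p = H p.
Proof.
  intros Hff Hord p Hp.
  assert (HaH := flow_force_eq_slope Hff Hord).
  assert (Hm : Rabs (gap p - gap (-1)) <= 0 * Rabs (p - -1)).
  { apply (MVT_bound_I gap (fun z => a z - H1 z)); auto using continuous_I_gap;
      [unfold Icl; lra | |].
    - intros z Hz. apply (is_derive_minus (V:=R_NormedModule)); [apply HKd | apply HHd];
      apply (Icl_between_interior (-1) p); auto; unfold Icl; lra.
    - intros z Hz. rewrite HaH, Rminus_eq_0, Rabs_R0; [lra|].
      apply (Icl_between (-1) p); auto. unfold Icl; lra. }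
  rewrite Rmult_0_l in Hm. unfold gap in Hm. rewrite HK1, HHm1 in Hm.
  assert (Hz : Rabs (K p - H p - (0 - 0)) = 0)
    by (apply Rle_antisym; [exact Hm | apply Rabs_pos]).
  apply Rabs_eq_0 in Hz. lra.
Qed.

End FlowForce.

(** * Both ends of the channel *)

Lemma limit_profile_eq_H g gq gp gqq gpp gpq M K rho rho1 H H1 F delta :
  bounded_C2 g gq gp gqq gpp M ->
  (forall p, Icl p -> cvg_pinfty (fun t => g t p) (K p)) ->
  height_flow g gq gp gqq gpq rho rho1 H H1 F delta ->
  (forall t, g t (-1) = 0) ->
  derive_on_I rho rho1 -> continuous_I rho1 -> (forall x, Icl x -> 0 < rho x) ->
  (forall x, Icl x -> rho1 x <= 0) ->
  derive_on_I H H1 -> continuous_I H1 -> (forall x, Icl x -> 0 < H1 x) -> H (-1) = 0 -> H 0 = 1 ->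
  0 < F ->
  flow_force rho H H1 F K = flow_force rho H H1 F H ->
  ((forall p, Icl p -> H p <= K p) \/ (forall p, Icl p -> K p <= H p)) ->
  forall p, Icl p -> K p = H p.
Proof.
  intros HB HK HE Hg1 Drho Crho1 Hrho Hrho1 DH CH1 HH1 HHm1 HH0 HF.
  assert (CH := derive_on_I_continuous_I H H1 DH).
  assert (HK1 : K (-1) = 0).
  { apply Rabs_eq_0, Rle_antisym; [|apply Rabs_pos]. apply le_epsilon. intros e He.
    destruct (HK (-1) ltac:(unfold Icl; lra) e He) as [T HT]. specialize (HT T (Rle_refl _)).
    rewrite Hg1, Rminus_0_l, Rabs_Ropp in HT. lra. }
  apply (flow_force_eq_ordered K (slope_limit gp) H H1 rho rho1 F); auto.
  - exact (continuous_I_K g gq gp gqq gpp M K HB HK).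
  - exact (continuous_I_slope_limit g gq gp gqq gpp M K HB HK).
  - intros x Hx. generalize (slope_limit_ge g gq gp gqq gpp M K HB HK delta (hf_gp_ge HE) x Hx),
      (hf_delta_pos HE). lra.
  - exact (K_derive g gq gp gqq gpp M K HB HK).
  - intros x Hx. apply derive_on_I_interior; auto.
  - exact (derive_on_I_continuous_I rho rho1 Drho).
  - apply Hrho. unfold Icl; lra.
  - intros x Hx. apply derive_on_I_interior; auto.
  - exact (phi_dev_top g gq gp gqq gpp gpq M K rho rho1 H H1 F delta HB HK HE).
  - exact (phi_dev_eq g gq gp gqq gpp gpq M K rho rho1 H H1 F delta HB HK HE Crho1 CH CH1 HH1 HF).
Qed.

Lemma is_derive_scale_arg (f : R -> R) s t l :
  is_derive f (s * t) l -> is_derive (fun u => f (s * u)) t (s * l).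
Proof.
  intros Hf. assert (Hs : is_derive (fun u : R => s * u) t s) by (auto_derive; auto; ring).
  replace (s * l) with (scal s l) by (unfold scal; simpl; unfold mult; simpl; ring).
  exact (is_derive_comp f (fun u => s * u) t l s Hf Hs).
Qed.

Lemma Rabs_sqr_1 s : s * s = 1 -> Rabs s = 1.
Proof.
  intros Hs. assert (E : Rabs s * Rabs s = 1) by (rewrite <- Rabs_mult, Hs; apply Rabs_R1).
  generalize (Rabs_pos s). nra.
Qed.

Lemma continuity_2d_pt_scale_fst f s t p : s * s = 1 ->
  continuity_2d_pt f (s * t) p -> continuity_2d_pt (fun u v => f (s * u) v) t p.
Proof.
  intros Hs H eps. destruct (H eps) as [d Hd]. exists d. intros u v Hu Hv. apply Hd; auto.
  replace (s * u - s * t) with (s * (u - t)) by ring.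
  rewrite Rabs_mult, Rabs_sqr_1, Rmult_1_l; auto.
Qed.

Lemma cont_strip_continuity_2d f q p : cont_strip f -> -1 < p < 0 -> continuity_2d_pt f q p.
Proof.
  intros Hc Hp. apply continuity_2d_pt_filterlim.
  intros P HP. specialize (Hc q p ltac:(unfold Icl; lra) P HP). unfold filtermap, within in *.
  assert (Hd : 0 < Rmin (p + 1) (- p)) by (apply Rmin_pos; lra).
  assert (HD : locally (q, p) (fun z : R * R => Icl (snd z))).
  { exists (mkposreal _ Hd). intros [u v] [_ Hv]. simpl.
    assert (Hv' : Rabs (v - p) < Rmin (p + 1) (- p)) by exact Hv.
    apply Rabs_def2 in Hv'. unfold Icl. unfold Rmin in Hv'. destruct (Rle_dec _ _) in Hv'; lra. }
  generalize (filter_and _ _ Hc HD). apply filter_imp. intros z [H1 H2]. auto.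
Qed.

(* Reading the strip from the right ([s = 1]) or from the left ([s = -1]). *)
Lemma bounded_C2_scale h hq hp hqq hqp hpq hpp s : s * s = 1 ->
  C2_bdd_strip h hq hp hqq hqp hpq hpp ->
  exists M, bounded_C2 (fun t p => h (s * t) p) (fun t p => s * hq (s * t) p)
    (fun t p => hp (s * t) p) (fun t p => hqq (s * t) p) (fun t p => hpp (s * t) p) M.
Proof.
  intros Hs [Hd [_ [_ [_ [_ [_ [_ [_ [_ [_ [[M1 Bp] [[M2 Bqq] [_ [_ [M3 Bpp]]]]]]]]]]]]]]].
  exists (Rabs M1 + Rabs M2 + Rabs M3).
  assert (A1 := Rle_abs M1). assert (A2 := Rle_abs M2). assert (A3 := Rle_abs M3).
  assert (P1 := Rabs_pos M1). assert (P2 := Rabs_pos M2). assert (P3 := Rabs_pos M3).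
  split; try (intros t p Hp; destruct (Hd (s * t) p Hp) as [D1 [D2 [D3 [D4 [D5 D6]]]]]).
  - lra.
  - apply (is_derive_scale_arg (fun u => h u p)); auto.
  - replace (hqq (s * t) p) with (s * (s * hqq (s * t) p)) by (rewrite <- Rmult_assoc, Hs; ring).
    apply (is_derive_scal (fun u => hq (s * u) p)), (is_derive_scale_arg (fun u => hq u p)); auto.
  - auto.
  - auto.
  - specialize (Bqq (s * t) p Hp). lra.
  - specialize (Bpp (s * t) p Hp). lra.
  - specialize (Bp (s * t) p Hp). lra.
Qed.

Lemma height_flow_scale h hq hp hqq hqp hpq hpp rho rho1 H H1 F delta s : s * s = 1 ->
  C2_bdd_strip h hq hp hqq hqp hpq hpp -> height_eq rho rho1 H H1 F h hq hp ->
  0 < delta -> (forall q p, -1 < p < 0 -> delta <= hp q p) ->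
  height_flow (fun t p => h (s * t) p) (fun t p => s * hq (s * t) p) (fun t p => hp (s * t) p)
    (fun t p => hqq (s * t) p) (fun t p => s * hpq (s * t) p) rho rho1 H H1 F delta.
Proof.
  intros Hs [Hd [_ [Cq [Cp [Cqq [_ [Cpq _]]]]]]] [Heq [Htop _]] Hdelta Hdp.
  assert (Hsq : forall x, (s * x) ^ 2 = x ^ 2) by (intros x; rewrite Rpow_mult_distr; simpl; nra).
  assert (Cscal : forall f t p, cont_strip f -> -1 < p < 0 ->
            continuity_2d_pt (fun u v => s * f (s * u) v) t p).
  { intros f t p Cf Hp. apply continuity_2d_pt_mult; [apply continuity_2d_pt_const|].
    apply continuity_2d_pt_scale_fst, cont_strip_continuity_2d; auto. }
  split; auto.
  - intros t p Hp. destruct (Hd (s * t) p Hp) as [_ [_ [_ [_ [D5 _]]]]].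
    apply (is_derive_scale_arg (fun u => hp u p)); auto.
  - intros t p Hp. apply (continuity_2d_pt_scale_fst hp), cont_strip_continuity_2d; auto.
  - intros t p Hp. apply (continuity_2d_pt_scale_fst hqq), cont_strip_continuity_2d; auto.
  - intros t p Hp. destruct (Heq (s * t) p Hp) as [A [B [HA [HB HAB]]]].
    exists A, B. split; [|split; auto].
    + eapply is_derive_ext; [|exact HA]. intros p'. rewrite Hsq. reflexivity.
    + replace B with (s * (s * B)) by (rewrite <- Rmult_assoc, Hs; ring).
      eapply is_derive_ext;
        [|apply (is_derive_scal (fun u => hq (s * u) p / hp (s * u) p)),
             (is_derive_scale_arg (fun u => hq u p / hp u p)); exact HB].
      intros u. simpl. unfold Rdiv. ring.
  - intros t. rewrite Hsq. apply Htop.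
Qed.

Lemma cvg_pinfty_is_lim_p (u : R -> R) (l : R) :
  is_lim u p_infty l -> cvg_pinfty (fun t => u (1 * t)) l.
Proof.
  intros Hl eps He. assert (Hl' := proj2 (is_lim_spec _ _ _) Hl). unfold is_lim' in Hl'.
  destruct (Hl' (mkposreal eps He)) as [M HM].
  exists (M + 1). intros t Ht. rewrite Rmult_1_l. apply HM. lra.
Qed.

Lemma cvg_pinfty_is_lim_m (u : R -> R) (l : R) :
  is_lim u m_infty l -> cvg_pinfty (fun t => u (-1 * t)) l.
Proof.
  intros Hl eps He. assert (Hl' := proj2 (is_lim_spec _ _ _) Hl). unfold is_lim' in Hl'.
  destruct (Hl' (mkposreal eps He)) as [M HM].
  exists (- M + 1). intros t Ht. apply HM. lra.
Qed.

Theorem corollary4p11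
  (alpha F : R) (rho rho1 rho2 H H1 H2 H3 : R -> R)
  (h hq hp hqq hqp hpq hpp : R -> R -> R) (Hplus Hminus : R -> R) :
  0 < alpha < 1 ->
  C2a_I alpha rho rho1 rho2 ->
  (forall p, Icl p -> 0 < rho p) ->
  (forall p, Icl p -> rho1 p <= 0) ->
  C3a_I alpha H H1 H2 H3 ->
  H (-1) = 0 -> H 0 = 1 ->
  (forall p, Icl p -> 0 < H1 p) ->
  0 < F ->
  C2_bdd_strip h hq hp hqq hqp hpq hpp ->
  height_eq rho rho1 H H1 F h hq hp ->
  (exists delta, 0 < delta /\ forall q p, -1 < p < 0 -> delta <= hp q p) ->
  (forall p, Icl p -> is_lim (fun q => h q p) p_infty (Hplus p)) ->
  (forall p, Icl p -> is_lim (fun q => h q p) m_infty (Hminus p)) ->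
  flow_force rho H H1 F Hplus = flow_force rho H H1 F H ->
  flow_force rho H H1 F Hminus = flow_force rho H H1 F H ->
  (((forall p, Icl p -> H p <= Hplus p) \/ (forall p, Icl p -> Hplus p <= H p)) ->
     forall p, Icl p -> Hplus p = H p) /\
  (((forall p, Icl p -> H p <= Hminus p) \/ (forall p, Icl p -> Hminus p <= H p)) ->
     forall p, Icl p -> Hminus p = H p).
Proof.
  intros _ [Drho [Drho1 _]] Hrho Hrho1 [DH [DH1 _]] HHm1 HH0 HH1 HF Hh Heq
    [delta [Hdelta Hdp]] Hlp Hlm Hffp Hffm.
  assert (Hend : forall s K, s * s = 1 ->
    (forall p, Icl p -> cvg_pinfty (fun t => h (s * t) p) (K p)) ->
    flow_force rho H H1 F K = flow_force rho H H1 F H ->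
    ((forall p, Icl p -> H p <= K p) \/ (forall p, Icl p -> K p <= H p)) ->
    forall p, Icl p -> K p = H p).
  { intros s K Hs HK Hff Hord.
    destruct (bounded_C2_scale h hq hp hqq hqp hpq hpp s Hs Hh) as [M HB].
    apply (limit_profile_eq_H _ _ _ _ _ (fun t p => s * hpq (s * t) p) M K rho rho1 H H1 F delta
             HB HK);
      auto.
    - apply (height_flow_scale h hq hp hqq hqp hpq hpp); auto.
    - intros t. apply Heq.
    - exact (derive_on_I_continuous_I rho1 rho2 Drho1).
    - exact (derive_on_I_continuous_I H1 H2 DH1). }
  split; intros Hord.
  - apply (Hend 1 Hplus); auto; [ring|].
    intros p Hp. apply (cvg_pinfty_is_lim_p (fun q => h q p)); auto.
  - apply (Hend (-1) Hminus); auto; [ring|].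
    intros p Hp. apply (cvg_pinfty_is_lim_m (fun q => h q p)); auto.
Qed.
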